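(* Every punctually computable function $f:[0,1]\to\mathbb{R}$ is uniformly punctually computable.
   Context: A sequence $(r_i)_{i\in\mathbb{N}}$ of rationals is a fast Cauchy sequence if $|r_i-r_{i+1}|<2^{-i}$ for all $i$. Names of points $x\in[0,1]$ are fast Cauchy sequences converging to $x$ consisting of dyadic rationals in $[0,1]$ (with the $i$-th term of the form $m/2^{i}$), so that the space of names is a compact, primitively recursively branching, totally disconnected space. A primitive recursive functional is one given by a primitive recursive scheme (built from basic functions by composition and primitive recursion) with an additional oracle function symbol interpreted as the name. A function $f:[0,1]\to\mathbb{R}$ is punctually computable if there is a primitive recursive functional $\Phi$ such that for every $x\in[0,1]$ and every name $\chi$ of $x$, $(\Phi^\chi(n))_{n\in\mathbb{N}}$ is a fast Cauchy sequence of rationals converging to $f(x)$. A function $f:[0,1]\to\mathbb{R}$ is uniformly punctually computable if there is a primitive recursive function which on input $i$ outputs (a code of) a polynomial $p_i$ with rational coefficients such that $\sup_{x\in[0,1]}|f(x)-p_i(x)|<2^{-i}$. *)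

From Stdlib Require Import Reals Lra List Arith Bool.
Import ListNotations.
Open Scope R_scope.
Local Open Scope bool_scope.

(** Untyped syntax; argument lists are [list nat], missing arguments read as 0
    (this changes nothing about the class of functions defined). *)
Inductive pr : Type :=
| PZero : pr
| PSucc : pr
| PProj : nat -> pr
| PComp : pr -> list pr -> pr
| PRec  : pr -> pr -> pr
| POrc  : pr.

Fixpoint pr_eval (o : nat -> nat) (p : pr) (args : list nat) {struct p} : nat :=
  match p with
  | PZero => 0%nat
  | PSucc => S (nth 0 args 0%nat)
  | PProj i => nth i args 0%nat
  | PComp f gs =>
      pr_eval o f ((fix evs (l : list pr) : list nat :=
                      match l with
                      | [] => []
                      | g :: l' => pr_eval o g args :: evs l'
                      end) gs)
  | PRec g h =>
      let rest := tl args in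
      (fix rec (k : nat) : nat :=
         match k with
         | 0%nat => pr_eval o g rest
         | S k' => pr_eval o h (k' :: rec k' :: rest)
         end) (nth 0 args 0%nat)
  | POrc => o (nth 0 args 0%nat)
  end.

Fixpoint oracle_free (p : pr) : bool :=
  match p with
  | PZero | PSucc | PProj _ => true
  | PComp f gs => oracle_free f &&
      (fix all_of (l : list pr) : bool :=
         match l with [] => true | g :: l' => oracle_free g && all_of l' end) gs
  | PRec g h => oracle_free g && oracle_free h
  | POrc => false
  end.

(* Cantor unpairing *)
Definition unpair (n : nat) : nat * nat :=
  let w := ((Nat.sqrt (8 * n + 1) - 1) / 2)%nat in
  let t := (w * (w + 1) / 2)%nat in
  let y := (n - t)%nat in
  ((w - y)%nat, y).

(* code of a rational: n = <a, <b, c>> codes (a - b)/(c + 1) *)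
Definition rat_of_code (n : nat) : R :=
  let (a, r) := unpair n in
  let (b, c) := unpair r in
  (INR a - INR b) / INR (S c).

(* code of a finite list of rationals: 0 codes [], S <h, t> codes h :: t *)
Fixpoint ratlist_of_code_fuel (fuel n : nat) : list R :=
  match fuel with
  | 0%nat => []
  | S fuel' =>
      match n with
      | 0%nat => []
      | S k => let (h, t) := unpair k in rat_of_code h :: ratlist_of_code_fuel fuel' t
      end
  end.

Definition ratlist_of_code (n : nat) : list R := ratlist_of_code_fuel n n.

(* polynomial with coefficient list [c0; c1; ...] (lowest degree first) *)
Definition poly_eval (cs : list R) (x : R) : R :=
  fold_right (fun c acc => c + x * acc) 0 cs.

Definition fast_cauchy (r : nat -> R) : Prop :=
  forall i : nat, Rabs (r i - r (S i)) < / 2 ^ i.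

Definition is_name (x : R) (m : nat -> nat) : Prop :=
  (forall i : nat, (m i <= 2 ^ i)%nat) /\
  fast_cauchy (fun i => INR (m i) / 2 ^ i) /\
  Un_cv (fun i => INR (m i) / 2 ^ i) x.

Definition punctually_computable (f : R -> R) : Prop :=
  exists Phi : pr,
    forall (x : R), 0 <= x <= 1 ->
    forall (m : nat -> nat), is_name x m ->
      fast_cauchy (fun n => rat_of_code (pr_eval m Phi [n])) /\
      Un_cv (fun n => rat_of_code (pr_eval m Phi [n])) (f x).

Definition uniformly_punctually_computable (f : R -> R) : Prop :=
  exists P : pr, oracle_free P = true /\
    forall i : nat,
      exists eps : R, eps < / 2 ^ i /\
        forall x : R, 0 <= x <= 1 ->
          Rabs (f x - poly_eval (ratlist_of_code (pr_eval (fun _ => 0%nat) P [i])) x) <= eps.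

From Stdlib Require Import Reals Lra Lia List Arith Bool ZArith.
Import ListNotations.

(** Let [Phi] be a primitive recursive functional computing [f] on names.
    1. Names of points of [0,1] are oracles bounded by [j |-> 2^j].  By
       induction on schemes, every scheme [p] has an oracle-free "majorant"
       scheme that bounds both the value of [p] and every oracle query made
       by [p], uniformly over such bounded oracles.  Hence [f] is bounded and
       the n-th output of [Phi] only reads the first [B n] digits of the
       name, which yields a primitive recursive modulus of continuity.
    2. Replacing the oracle by a scheme with extra parameters ("threading")
       turns [Phi] run on the canonical name of [k / 2^d] into an
       oracle-free scheme of [n, k, d].
    3. The Bernstein polynomial of degree [2^d] built from these values
       approximates [f] uniformly; its monomial coefficients are computed,
       rounded to dyadic rationals and coded by an oracle-free scheme. *)

Section Schemes.
Local Open Scope nat_scope.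

(** Induction principle for [pr] that sees through the nested list in [PComp]. *)
Definition pr_ind_nested (P : pr -> Prop) (H0 : P PZero) (HS : P PSucc)
  (HP : forall i, P (PProj i))
  (HC : forall f gs, P f -> Forall P gs -> P (PComp f gs))
  (HR : forall g h, P g -> P h -> P (PRec g h)) (HO : P POrc) : forall p, P p :=
  fix F p := match p with
  | PZero => H0 | PSucc => HS | PProj i => HP i
  | PComp f gs => HC f gs (F f) ((fix G l := match l return Forall P l with
       | [] => Forall_nil _ | g :: l' => Forall_cons _ (F g) (G l') end) gs)
  | PRec g h => HR g h (F g) (F h)
  | POrc => HO end.

Lemma pr_eval_comp o f gs args :
  pr_eval o (PComp f gs) args = pr_eval o f (map (fun g => pr_eval o g args) gs).
Proof. reflexivity. Qed.

Fixpoint rec_iter o g h (rest : list nat) (k : nat) : nat :=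
  match k with
  | 0 => pr_eval o g rest
  | S k' => pr_eval o h (k' :: rec_iter o g h rest k' :: rest)
  end.

Lemma pr_eval_rec o g h args :
  pr_eval o (PRec g h) args = rec_iter o g h (tl args) (nth 0 args 0).
Proof. simpl. generalize (nth 0 args 0). induction n; simpl; congruence. Qed.

Lemma oracle_free_comp f gs :
  oracle_free (PComp f gs) = oracle_free f && forallb oracle_free gs.
Proof. reflexivity. Qed.

Lemma oracle_free_rec g h : oracle_free (PRec g h) = oracle_free g && oracle_free h.
Proof. reflexivity. Qed.

Lemma pr_eval_oracle_ext : forall p o o' l,
  (forall j, o j = o' j) -> pr_eval o p l = pr_eval o' p l.
Proof.
  induction p using pr_ind_nested; intros o o' l Ho; try reflexivity.
  - rewrite !pr_eval_comp, (IHp o o') by auto. f_equal. apply map_ext_in.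
    intros g Hg. rewrite Forall_forall in H. apply H; auto.
  - rewrite !pr_eval_rec. generalize (nth 0 l 0). induction n; simpl; auto.
    rewrite IHn. auto.
  - simpl. apply Ho.
Qed.

End Schemes.

(** ** A compiler from expressions with local recursion to schemes

    Writing schemes directly is impractical; [expr] allows named variables
    (de Bruijn indices into an environment), calls of already built schemes
    and a primitive recursion binder [ERec b s bd] whose step [s] sees the
    counter and the previous value pushed in front of the environment. *)

Section Compiler.
Local Open Scope nat_scope.

(** The oracle is irrelevant for the oracle-free schemes built below. *)
Definition o0 : nat -> nat := fun _ => 0.

Inductive expr :=
| EVar (n : nat) | EZero | ESucc (e : expr)
| ERec (b s bd : expr) | ECall (p : pr) (es : list expr).

Fixpoint den (env : list nat) (e : expr) : nat :=
  match e with
  | EVar n => nth n env 0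
  | EZero => 0
  | ESucc e => S (den env e)
  | ERec b s bd => (fix rec k := match k with
                     | 0 => den env b
                     | S k' => den (k' :: rec k' :: env) s end) (den env bd)
  | ECall p es => pr_eval o0 p (map (den env) es)
  end.

Fixpoint den_iter env b s k :=
  match k with 0 => den env b | S k' => den (k' :: den_iter env b s k' :: env) s end.

Lemma den_rec env b s bd : den env (ERec b s bd) = den_iter env b s (den env bd).
Proof. simpl. generalize (den env bd). induction n; simpl; congruence. Qed.

(** Compilation for environments of width [n]; variables beyond [n] read 0. *)
Fixpoint compile (n : nat) (e : expr) : pr :=
  match e with
  | EVar i => if i <? n then PProj i else PZero
  | EZero => PZero
  | ESucc e => PComp PSucc [compile n e]
  | ERec b s bd => PComp (PRec (compile n b) (compile (S (S n)) s))
                         (compile n bd :: map PProj (seq 0 n))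
  | ECall p es => PComp p (map (compile n) es)
  end.

Definition pad n (env : list nat) := map (fun j => nth j env 0) (seq 0 n).

Lemma nth_pad j n env : nth j (pad n env) 0 = if j <? n then nth j env 0 else 0.
Proof.
  unfold pad. destruct (Nat.ltb_spec j n).
  - rewrite nth_indep with (d' := (fun j => nth j env 0) 0)
      by (rewrite length_map, length_seq; auto).
    rewrite (map_nth (fun j => nth j env 0)), seq_nth; auto.
  - apply nth_overflow. rewrite length_map, length_seq; auto.
Qed.

Lemma length_pad n env : length (pad n env) = n.
Proof. unfold pad. rewrite length_map, length_seq. auto. Qed.

Lemma pad_ext n l l' : (forall j, j < n -> nth j l 0 = nth j l' 0) -> pad n l = pad n l'.
Proof. intros H. unfold pad. apply map_ext_in. intros a Ha. apply in_seq in Ha. apply H. lia. Qed.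

Lemma pad_exact l : pad (length l) l = l.
Proof.
  apply nth_ext with (d := 0) (d' := 0). apply length_pad.
  intros j Hj. rewrite length_pad in Hj. rewrite nth_pad.
  destruct (Nat.ltb_spec j (length l)); lia || auto.
Qed.

Lemma pad_pad n env : pad n (pad n env) = pad n env.
Proof. apply pad_ext. intros j Hj. rewrite nth_pad. destruct (Nat.ltb_spec j n); lia || auto. Qed.

Lemma map_eval_proj o (env : list nat) n :
  map (fun g => pr_eval o g env) (map PProj (seq 0 n)) = pad n env.
Proof. rewrite map_map. reflexivity. Qed.

Definition expr_ind_nested (P : expr -> Prop) (HV : forall n, P (EVar n)) (HZ : P EZero)
  (HS : forall e, P e -> P (ESucc e))
  (HR : forall b s bd, P b -> P s -> P bd -> P (ERec b s bd))
  (HC : forall p es, Forall P es -> P (ECall p es)) : forall e, P e :=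
  fix F e := match e with
  | EVar n => HV n | EZero => HZ | ESucc e => HS e (F e)
  | ERec b s bd => HR b s bd (F b) (F s) (F bd)
  | ECall p es => HC p es ((fix G l := match l return Forall P l with
       | [] => Forall_nil _ | g :: l' => Forall_cons _ (F g) (G l') end) es) end.

Theorem compile_correct : forall e n env, pr_eval o0 (compile n e) env = den (pad n env) e.
Proof.
  induction e using expr_ind_nested; intros m env.
  - simpl. rewrite nth_pad. destruct (n <? m); reflexivity.
  - reflexivity.
  - simpl compile. rewrite pr_eval_comp. simpl. rewrite IHe. reflexivity.
  - simpl compile. rewrite pr_eval_comp. simpl map. rewrite map_eval_proj, pr_eval_rec.
    change (rec_iter o0 (compile m e1) (compile (S (S m)) e2) (pad m env)
              (pr_eval o0 (compile m e3) env) = den (pad m env) (ERec e1 e2 e3)).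
    rewrite den_rec, IHe3. generalize (den (pad m env) e3). induction n; simpl.
    + rewrite IHe1, pad_pad. reflexivity.
    + rewrite IHe2, IHn. f_equal.
      replace (S (S m)) with (length (n :: den_iter (pad m env) e1 e2 n :: pad m env))
        by (simpl; rewrite length_pad; auto).
      apply pad_exact.
  - simpl compile. rewrite pr_eval_comp. simpl. f_equal. rewrite map_map.
    apply map_ext_in. intros a Ha. rewrite Forall_forall in H. apply H; auto.
Qed.

Fixpoint expr_oracle_free (e : expr) : bool :=
  match e with
  | EVar _ | EZero => true
  | ESucc e => expr_oracle_free e
  | ERec b s bd => expr_oracle_free b && expr_oracle_free s && expr_oracle_free bd
  | ECall p es => oracle_free p && forallb expr_oracle_free es
  end.

Lemma compile_oracle_free : forall e n,
  expr_oracle_free e = true -> oracle_free (compile n e) = true.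
Proof.
  induction e using expr_ind_nested; intros m Hf; simpl in Hf.
  - simpl. destruct (n <? m); reflexivity.
  - reflexivity.
  - simpl. rewrite IHe; auto.
  - apply andb_prop in Hf as [Hf H3]. apply andb_prop in Hf as [H1 H2].
    cbn [compile]. rewrite oracle_free_comp. simpl. rewrite IHe1, IHe2, IHe3; auto. simpl.
    rewrite forallb_forall. intros x Hx. apply in_map_iff in Hx as [? [<- _]]. reflexivity.
  - apply andb_prop in Hf as [H1 H2]. cbn [compile]. rewrite oracle_free_comp, H1. simpl.
    rewrite forallb_forall in *. intros x Hx. apply in_map_iff in Hx as [y [<- Hy]].
    rewrite Forall_forall in H. apply H; auto.
Qed.

End Compiler.

Section Arithmetic.
Local Open Scope nat_scope.

Lemma compile_exact e n env : length env = n -> pr_eval o0 (compile n e) env = den env e.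
Proof. intros <-. rewrite compile_correct, pad_exact. reflexivity. Qed.

Definition ADD := compile 2 (ERec (EVar 0) (ESucc (EVar 1)) (EVar 1)).
Lemma ADD_sem a b : pr_eval o0 ADD [a; b] = a + b.
Proof.
  unfold ADD. rewrite compile_exact, den_rec by reflexivity. cbn [den nth].
  induction b as [|k IH] at 2 3; cbn [den_iter den nth]; lia.
Qed.

Definition PRED := compile 1 (ERec EZero (EVar 0) (EVar 0)).
Lemma PRED_sem a : pr_eval o0 PRED [a] = pred a.
Proof. unfold PRED. rewrite compile_exact, den_rec by reflexivity. destruct a; reflexivity. Qed.

Definition SUB := compile 2 (ERec (EVar 0) (ECall PRED [EVar 1]) (EVar 1)).
Lemma SUB_sem a b : pr_eval o0 SUB [a; b] = a - b.
Proof.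
  unfold SUB. rewrite compile_exact, den_rec by reflexivity. cbn [den nth].
  induction b as [|k IH] at 2 3; cbn [den_iter den map nth]; [lia|].
  rewrite PRED_sem, IH. lia.
Qed.

Definition MUL := compile 2 (ERec EZero (ECall ADD [EVar 1; EVar 2]) (EVar 1)).
Lemma MUL_sem a b : pr_eval o0 MUL [a; b] = a * b.
Proof.
  unfold MUL. rewrite compile_exact, den_rec by reflexivity. cbn [den nth].
  induction b as [|k IH] at 2 3; cbn [den_iter den map nth]; [lia|].
  rewrite ADD_sem, IH. lia.
Qed.

Definition POW := compile 2 (ERec (ESucc EZero) (ECall MUL [EVar 1; EVar 2]) (EVar 1)).
Lemma POW_sem a b : pr_eval o0 POW [a; b] = a ^ b.
Proof.
  unfold POW. rewrite compile_exact, den_rec by reflexivity. cbn [den nth].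
  induction b as [|k IH] at 2 3; cbn [den_iter den map nth]; [reflexivity|].
  rewrite MUL_sem, IH. simpl. lia.
Qed.

Definition eadd a b := ECall ADD [a; b].
Definition esub a b := ECall SUB [a; b].
Definition emul a b := ECall MUL [a; b].
Definition epow a b := ECall POW [a; b].
Definition econst (c : nat) := Nat.iter c ESucc EZero.

Lemma den_add env a b : den env (eadd a b) = den env a + den env b.
Proof. apply ADD_sem. Qed.
Lemma den_sub env a b : den env (esub a b) = den env a - den env b.
Proof. apply SUB_sem. Qed.
Lemma den_mul env a b : den env (emul a b) = den env a * den env b.
Proof. apply MUL_sem. Qed.
Lemma den_pow env a b : den env (epow a b) = den env a ^ den env b.
Proof. apply POW_sem. Qed.
Lemma den_const env c : den env (econst c) = c.
Proof. induction c; simpl; auto. Qed.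
Lemma den_succ env a : den env (ESucc a) = S (den env a).
Proof. reflexivity. Qed.

Lemma expr_oracle_free_const c : expr_oracle_free (econst c) = true.
Proof. induction c; simpl; auto. Qed.

Definition eleq a b := esub (econst 1) (esub a b).
Lemma den_leq env a b : den env (eleq a b) = if den env a <=? den env b then 1 else 0.
Proof. unfold eleq. rewrite !den_sub, den_const. destruct (Nat.leb_spec (den env a) (den env b)); lia. Qed.

Fixpoint sumN (f : nat -> nat) (n : nat) : nat :=
  match n with 0 => 0 | S k => sumN f k + f k end.

Lemma sumN_ext f g n : (forall k, k < n -> f k = g k) -> sumN f n = sumN g n.
Proof. induction n; simpl; intros; auto. rewrite IHn, H; auto. Qed.

Lemma sumN_indicator n q : sumN (fun t => if t <? q then 1 else 0) n = Nat.min n q.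
Proof. induction n; cbn [sumN]; [lia|]. rewrite IHn. destruct (Nat.ltb_spec n q); lia. Qed.

Lemma sumN_threshold (P : nat -> bool) n q : q <= n ->
  (forall t, P t = true <-> t < q) -> sumN (fun t => if P t then 1 else 0) n = q.
Proof.
  intros Hq HP. rewrite sumN_ext with (g := fun t => if t <? q then 1 else 0).
  - rewrite sumN_indicator. lia.
  - intros k _. specialize (HP k). destruct (P k), (Nat.ltb_spec k q); intuition (easy || lia).
Qed.

(** Division: [a / b] counts the [t < a] with [(t + 1) * b <= a]. *)
Definition DIV := compile 2
  (ERec EZero (eadd (EVar 1) (eleq (emul (ESucc (EVar 0)) (EVar 3)) (EVar 2))) (EVar 0)).
Lemma DIV_sem a b : 0 < b -> pr_eval o0 DIV [a; b] = a / b.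
Proof.
  intros Hb. unfold DIV. rewrite compile_exact, den_rec by reflexivity. cbn [den nth].
  assert (Hcount : forall k, den_iter [a; b]
      EZero (eadd (EVar 1) (eleq (emul (ESucc (EVar 0)) (EVar 3)) (EVar 2))) k =
      sumN (fun t => if S t * b <=? a then 1 else 0) k).
  { induction k as [|k IH]; cbn [den_iter sumN]; auto.
    rewrite den_add, den_leq, den_mul, IH. reflexivity. }
  rewrite Hcount. apply sumN_threshold.
  - apply Nat.Div0.div_le_upper_bound. nia.
  - intros t. rewrite Nat.leb_le. split; intros H.
    + assert (S t <= a / b) by (apply Nat.div_le_lower_bound; lia). lia.
    + pose proof (Nat.Div0.mul_div_le a b). nia.
Qed.
Definition ediv a b := ECall DIV [a; b].
Lemma den_div env a b : 0 < den env b -> den env (ediv a b) = den env a / den env b.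
Proof. intros. apply DIV_sem; auto. Qed.

Definition FACT := compile 1 (ERec (econst 1) (emul (ESucc (EVar 0)) (EVar 1)) (EVar 0)).
Lemma FACT_sem a : pr_eval o0 FACT [a] = fact a.
Proof.
  unfold FACT. rewrite compile_exact, den_rec by reflexivity. cbn [den nth].
  generalize [a] at 1. intros env.
  induction a as [|a IH]; cbn [den_iter]; [apply den_const|].
  rewrite den_mul. cbn [den nth]. rewrite IH. reflexivity.
Qed.
Definition efact a := ECall FACT [a].

Fixpoint binom (n k : nat) : nat :=
  match n, k with
  | _, O => 1
  | O, S _ => 0
  | S n', S k' => binom n' k' + binom n' k
  end.

Lemma binom_n0 n : binom n 0 = 1.
Proof. destruct n; reflexivity. Qed.

Lemma binom_over : forall n k, n < k -> binom n k = 0.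
Proof. induction n; intros [|k] H; simpl; try lia; auto. rewrite !IHn; lia. Qed.

Lemma binom_fact : forall n k, k <= n -> binom n k * (fact k * fact (n - k)) = fact n.
Proof.
  induction n; intros k Hk.
  - destruct k; simpl; [reflexivity| lia].
  - destruct k as [|k].
    + simpl. lia.
    + simpl binom. destruct (Nat.eq_dec k n) as [->|Hne].
      * rewrite (binom_over n (S n)) by lia. rewrite Nat.sub_diag.
        pose proof (IHn n (le_n n)). rewrite Nat.sub_diag in H. simpl fact in *. nia.
      * pose proof (IHn k ltac:(lia)) as H1. pose proof (IHn (S k) ltac:(lia)) as H2.
        replace (S n - S k) with (n - k) by lia.
        replace (n - k) with (S (n - S k)) in H1 |- * by lia.
        simpl fact in *. nia.
Qed.

Definition BINOM := compile 2
  (ediv (efact (EVar 0)) (emul (efact (EVar 1)) (efact (esub (EVar 0) (EVar 1))))).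
Lemma BINOM_sem n k : k <= n -> pr_eval o0 BINOM [n; k] = binom n k.
Proof.
  intros Hk. unfold BINOM. rewrite compile_exact by reflexivity.
  pose proof (lt_O_fact k). pose proof (lt_O_fact (n - k)).
  rewrite den_div; unfold efact; rewrite den_mul; cbn [den map nth];
    rewrite ?den_sub, !FACT_sem; cbn [den nth]; [|nia].
  rewrite <- (binom_fact n k Hk) at 1. apply Nat.div_mul. nia.
Qed.
Definition ebinom a b := ECall BINOM [a; b].

Definition PAR := compile 1 (ERec EZero (esub (econst 1) (EVar 1)) (EVar 0)).
Lemma PAR_sem a : pr_eval o0 PAR [a] = if Nat.even a then 0 else 1.
Proof.
  unfold PAR. rewrite compile_exact, den_rec by reflexivity. cbn [den nth].
  generalize [a] at 1. intros env.
  induction a as [|a IH]; cbn [den_iter]; [reflexivity|].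
  rewrite den_sub, den_const. cbn [den nth]. rewrite IH, Nat.even_succ, <- Nat.negb_even.
  destruct (Nat.even a); reflexivity.
Qed.
Definition epar a := ECall PAR [a].

End Arithmetic.

Section Pairing.
Local Open Scope nat_scope.

Fixpoint tri w := match w with 0 => 0 | S k => tri k + S k end.

Lemma tri_double w : 2 * tri w = w * (w + 1).
Proof. induction w; simpl tri; nia. Qed.
Lemma tri_mono a b : a <= b -> tri a <= tri b.
Proof. induction 1; simpl; lia. Qed.
Lemma tri_ge w : w <= tri w.
Proof. induction w; simpl; lia. Qed.

Lemma unpair_char n : let w := fst (unpair n) + snd (unpair n) in
  tri w <= n < tri (S w) /\ snd (unpair n) = n - tri w.
Proof.
  unfold unpair. cbv zeta.
  set (s := Nat.sqrt (8 * n + 1)).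
  pose proof (Nat.sqrt_spec (8 * n + 1) ltac:(lia)) as [H1 H2]. fold s in H1, H2.
  set (w := (s - 1) / 2).
  assert (Hw : 2 * w + 1 <= s <= 2 * w + 2).
  { assert (s >= 1) by nia. pose proof (Nat.div_mod (s - 1) 2 ltac:(lia)).
    pose proof (Nat.mod_upper_bound (s - 1) 2 ltac:(lia)). fold w in H0. lia. }
  assert (Ht : w * (w + 1) / 2 = tri w).
  { rewrite <- tri_double, Nat.mul_comm. apply Nat.div_mul. lia. }
  rewrite Ht. pose proof (tri_double w). pose proof (tri_double (S w)).
  assert (tri w <= n) by nia.
  assert (n < tri (S w)) by nia.
  simpl fst; simpl snd.
  replace (w - (n - tri w) + (n - tri w)) with w by (simpl tri in *; lia).
  auto.
Qed.

Definition cpair a b := tri (a + b) + b.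

Lemma tri_unique w w' n : tri w <= n < tri (S w) -> tri w' <= n < tri (S w') -> w = w'.
Proof.
  intros [A B] [C D]. destruct (Nat.lt_trichotomy w w') as [H|[H|H]]; auto; exfalso.
  - assert (tri (S w) <= tri w') by (apply tri_mono; lia). lia.
  - assert (tri (S w') <= tri w) by (apply tri_mono; lia). lia.
Qed.

Lemma unpair_pair a b : unpair (cpair a b) = (a, b).
Proof.
  destruct (unpair_char (cpair a b)) as [H1 H2].
  assert (E : fst (unpair (cpair a b)) + snd (unpair (cpair a b)) = a + b).
  { apply (tri_unique _ _ (cpair a b)); auto. unfold cpair. simpl tri. lia. }
  rewrite E in H2. assert (Hb : snd (unpair (cpair a b)) = b) by (rewrite H2; unfold cpair; lia).
  destruct (unpair (cpair a b)) as [x y]. simpl in *. f_equal; lia.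
Qed.

Lemma unpair_le n : fst (unpair n) <= n /\ snd (unpair n) <= n.
Proof.
  destruct (unpair_char n) as [[H1 H2] H3].
  pose proof (tri_ge (fst (unpair n) + snd (unpair n))). lia.
Qed.

Definition TRI := compile 1 (ERec EZero (eadd (EVar 1) (ESucc (EVar 0))) (EVar 0)).
Lemma TRI_sem a : pr_eval o0 TRI [a] = tri a.
Proof.
  unfold TRI. rewrite compile_exact, den_rec by reflexivity. cbn [den nth].
  generalize [a] at 1. intros env.
  induction a as [|a IH]; cbn [den_iter tri]; auto. rewrite den_add, IH. reflexivity.
Qed.
Definition etri a := ECall TRI [a].

Definition PAIR := compile 2 (eadd (etri (eadd (EVar 0) (EVar 1))) (EVar 1)).
Lemma PAIR_sem a b : pr_eval o0 PAIR [a; b] = cpair a b.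
Proof.
  unfold PAIR. rewrite compile_exact, den_add by reflexivity.
  unfold etri. cbn [den map]. rewrite TRI_sem, den_add. reflexivity.
Qed.
Definition epair a b := ECall PAIR [a; b].
Lemma den_pair env a b : den env (epair a b) = cpair (den env a) (den env b).
Proof. apply PAIR_sem. Qed.

(** The diagonal of [n], counted as the number of [t < n] with [tri (t + 1) <= n]. *)
Definition DIAG := compile 1
  (ERec EZero (eadd (EVar 1) (eleq (etri (ESucc (EVar 0))) (EVar 2))) (EVar 0)).
Lemma DIAG_sem n : pr_eval o0 DIAG [n] = fst (unpair n) + snd (unpair n).
Proof.
  unfold DIAG. rewrite compile_exact, den_rec by reflexivity. cbn [den nth].
  set (w := fst (unpair n) + snd (unpair n)).
  destruct (unpair_char n) as [[H1 H2] _]. fold w in H1, H2.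
  assert (Hcount : forall k, den_iter [n]
      EZero (eadd (EVar 1) (eleq (etri (ESucc (EVar 0))) (EVar 2))) k =
      sumN (fun t => if tri (S t) <=? n then 1 else 0) k).
  { induction k as [|k IH]; cbn [den_iter sumN]; auto.
    rewrite den_add, den_leq, IH. unfold etri. cbn [den map nth]. rewrite TRI_sem. reflexivity. }
  rewrite Hcount. apply sumN_threshold.
  - pose proof (tri_ge w). lia.
  - intros t. rewrite Nat.leb_le. split; intros H.
    + destruct (Nat.lt_ge_cases t w) as [|Hwt]; auto.
      assert (tri (S w) <= tri (S t)) by (apply tri_mono; lia). lia.
    + assert (tri (S t) <= tri w) by (apply tri_mono; lia). lia.
Qed.

Definition UN2 := compile 1 (esub (EVar 0) (etri (ECall DIAG [EVar 0]))).
Definition UN1 := compile 1 (esub (ECall DIAG [EVar 0]) (ECall UN2 [EVar 0])).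
Lemma UN2_sem n : pr_eval o0 UN2 [n] = snd (unpair n).
Proof.
  unfold UN2. rewrite compile_exact, den_sub by reflexivity. unfold etri. cbn [den map nth].
  rewrite DIAG_sem, TRI_sem. destruct (unpair_char n) as [_ H]. symmetry. exact H.
Qed.
Lemma UN1_sem n : pr_eval o0 UN1 [n] = fst (unpair n).
Proof.
  unfold UN1. rewrite compile_exact, den_sub by reflexivity. cbn [den map nth].
  rewrite DIAG_sem, UN2_sem. lia.
Qed.
Definition eun1 a := ECall UN1 [a].
Definition eun2 a := ECall UN2 [a].
Lemma den_un1 env a : den env (eun1 a) = fst (unpair (den env a)).
Proof. apply UN1_sem. Qed.
Lemma den_un2 env a : den env (eun2 a) = snd (unpair (den env a)).
Proof. apply UN2_sem. Qed.

Definition rat_pos v := fst (unpair v).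
Definition rat_neg v := fst (unpair (snd (unpair v))).
Definition rat_den v := snd (unpair (snd (unpair v))).

Fixpoint lcode (l : list nat) : nat := match l with [] => 0 | h :: t => S (cpair h (lcode t)) end.

Lemma lcode_len l : length l <= lcode l.
Proof. induction l; simpl; auto. unfold cpair at 1. lia. Qed.

Lemma ratlist_fuel : forall l fuel, length l <= fuel ->
  ratlist_of_code_fuel fuel (lcode l) = map rat_of_code l.
Proof.
  induction l; intros fuel Hf; simpl.
  - destruct fuel; reflexivity.
  - destruct fuel as [|fuel]; simpl in Hf; [lia|]. cbn [ratlist_of_code_fuel].
    rewrite unpair_pair, IHl by lia. reflexivity.
Qed.

Lemma ratlist_lcode l : ratlist_of_code (lcode l) = map rat_of_code l.
Proof. apply ratlist_fuel, lcode_len. Qed.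

End Pairing.

(** ** Replacing the oracle by a scheme ("threading")

    [thread K Q p] is an oracle-free-except-for-[Q] scheme which, on an
    argument list made of [K] ordinary arguments followed by two parameters
    [a] and [b], computes [p] with the oracle [j |-> Q [j; a; b]].  The two
    parameters are carried along at positions [K] and [K + 1]; this needs
    [p] to read fewer than [K] positions everywhere ([threadable K p]). *)

Section Threading.
Local Open Scope nat_scope.

Fixpoint read_width (p : pr) : nat :=
  match p with
  | PZero => 0 | PSucc => 1 | PProj i => S i | POrc => 1
  | PComp f gs => list_max (map read_width gs)
  | PRec g h => max 1 (max (S (read_width g)) (pred (read_width h)))
  end.

Lemma in_le_list_max x l : In x l -> x <= list_max l.
Proof.
  intros H. pose proof (proj1 (list_max_le l (list_max l)) (le_n _)) as Hl.
  rewrite Forall_forall in Hl. auto.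
Qed.

Lemma nth_map_lt {A B} (F : A -> B) l j d x : j < length l -> nth j (map F l) d = F (nth j l x).
Proof. intros H. rewrite nth_indep with (d' := F x) by (rewrite length_map; auto). apply map_nth. Qed.

Lemma nth_tl j (l : list nat) : nth j (tl l) 0 = nth (S j) l 0.
Proof. destruct l; simpl; auto. destruct j; auto. Qed.

Definition agree_upto K (l l' : list nat) := forall j, j < K -> nth j l 0 = nth j l' 0.

Lemma read_width_spec : forall p o l l',
  agree_upto (read_width p) l l' -> pr_eval o p l = pr_eval o p l'.
Proof.
  induction p using pr_ind_nested; intros o l l' Ha; unfold agree_upto in Ha;
    cbn [read_width] in Ha.
  - reflexivity.
  - simpl. rewrite Ha; auto.
  - simpl. apply Ha; auto.
  - rewrite !pr_eval_comp. f_equal. apply map_ext_in. intros g Hg. rewrite Forall_forall in H.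
    apply H; auto. intros j Hj. apply Ha. eapply Nat.lt_le_trans; [apply Hj|].
    apply in_le_list_max, in_map. auto.
  - rewrite !pr_eval_rec, (Ha 0) by lia. generalize (nth 0 l' 0). induction n; simpl.
    + apply IHp1. intros j Hj. rewrite !nth_tl. apply Ha. lia.
    + rewrite IHn. apply IHp2. intros j Hj. destruct j as [|[|j]]; simpl; auto.
      rewrite !nth_tl. apply Ha. lia.
  - simpl. rewrite Ha; auto.
Qed.

Fixpoint threadable K (p : pr) : bool :=
  match p with
  | PZero | PSucc | POrc => true
  | PProj i => i <? K
  | PComp f gs => threadable K f && forallb (threadable K) gs
  | PRec g h => (S (read_width g) <=? K) && threadable K g && threadable K h
  end.

Fixpoint thread_width (p : pr) : nat :=
  match p with
  | PProj i => S i
  | PComp f gs => max (thread_width f) (list_max (map thread_width gs))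
  | PRec g h => max (S (read_width g)) (max (thread_width g) (thread_width h))
  | _ => 0
  end.

Lemma threadable_width : forall p K, thread_width p <= K -> threadable K p = true.
Proof.
  induction p using pr_ind_nested; intros K Hn; cbn [thread_width threadable] in *; auto.
  - apply Nat.ltb_lt. lia.
  - rewrite IHp by lia. simpl. rewrite forallb_forall. intros g Hg.
    rewrite Forall_forall in H. apply H; auto.
    assert (thread_width g <= list_max (map thread_width gs)) by (apply in_le_list_max, in_map; auto).
    lia.
  - rewrite IHp1, IHp2 by lia. rewrite !andb_true_r. apply Nat.leb_le. lia.
Qed.

Variable K : nat.
Variable Q : pr.
Definition pad_schemes (ts : list pr) := map (fun j => nth j ts PZero) (seq 0 K).

Fixpoint thread (p : pr) : pr :=
  match p with
  | PZero => PZero | PSucc => PSucc | PProj i => PProj i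
  | POrc => PComp Q [PProj 0; PProj K; PProj (S K)]
  | PComp f gs => PComp (thread f) (pad_schemes (map thread gs) ++ [PProj K; PProj (S K)])
  | PRec g h =>
      PRec (PComp (thread g) (map PProj (seq 0 (K - 1)) ++ [PZero; PProj (K - 1); PProj K]))
           (PComp (thread h) (map PProj (seq 0 K) ++ [PProj (S K); PProj (S (S K))]))
  end.

Lemma thread_oracle_free :
  oracle_free Q = true -> forall p, oracle_free (thread p) = true.
Proof.
  intros HQ. induction p using pr_ind_nested; cbn [thread]; auto.
  - rewrite oracle_free_comp, IHp. simpl. rewrite forallb_app. apply andb_true_intro; split.
    + unfold pad_schemes. rewrite forallb_forall. intros x Hx. apply in_map_iff in Hx as [j [<- _]].
      destruct (Nat.ltb_spec j (length gs)).
      * rewrite (nth_map_lt _ _ _ _ PZero) by auto. rewrite Forall_forall in H. apply H, nth_In; auto.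
      * rewrite nth_overflow by (rewrite length_map; lia). reflexivity.
    + reflexivity.
  - rewrite oracle_free_rec, !oracle_free_comp, IHp1, IHp2. simpl. rewrite !forallb_app. simpl.
    rewrite !andb_true_r. apply andb_true_intro; split; rewrite forallb_forall; intros x Hx;
    apply in_map_iff in Hx as [j [<- _]]; reflexivity.
  - rewrite oracle_free_comp, HQ. reflexivity.
Qed.

Lemma nth_thread_args j l a b : nth j (pad K l ++ [a; b]) 0 =
  if j <? K then nth j l 0 else if j =? K then a else if j =? S K then b else 0.
Proof.
  destruct (Nat.ltb_spec j K).
  - rewrite app_nth1 by (rewrite length_pad; auto). rewrite nth_pad.
    destruct (Nat.ltb_spec j K); lia || auto.
  - rewrite app_nth2 by (rewrite length_pad; auto). rewrite length_pad.
    destruct (j - K) as [|[|t]] eqn:E; simpl.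
    + replace j with K by lia. rewrite Nat.eqb_refl. auto.
    + replace j with (S K) by lia. rewrite Nat.eqb_refl.
      destruct (Nat.eqb_spec (S K) K); lia || auto.
    + destruct (Nat.eqb_spec j K); [lia|]. destruct (Nat.eqb_spec j (S K)); [lia|].
      destruct t; auto.
Qed.

Lemma nth_thread_K l a b : nth K (pad K l ++ [a; b]) 0 = a.
Proof. rewrite nth_thread_args, Nat.ltb_irrefl, Nat.eqb_refl. reflexivity. Qed.

Lemma nth_thread_SK l a b : nth (S K) (pad K l ++ [a; b]) 0 = b.
Proof.
  rewrite nth_thread_args. destruct (Nat.ltb_spec (S K) K); [lia|].
  destruct (Nat.eqb_spec (S K) K); [lia|]. rewrite Nat.eqb_refl. reflexivity.
Qed.

Lemma thread_args_eq L l a b : length L = S (S K) -> (forall j, j < K -> nth j L 0 = nth j l 0) ->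
  nth K L 0 = a -> nth (S K) L 0 = b -> L = pad K l ++ [a; b].
Proof.
  intros Hl Hj Ha Hb. apply nth_ext with (d := 0) (d' := 0).
  - rewrite Hl, length_app, length_pad. simpl. lia.
  - intros j Hj'. rewrite nth_thread_args. destruct (Nat.ltb_spec j K); auto.
    destruct (Nat.eqb_spec j K); subst; auto.
    destruct (Nat.eqb_spec j (S K)); subst; auto. lia.
Qed.

Hypothesis HK : 2 <= K.

(** In the base case of a recursion, the list [tl L] of width [K - 1] is
    re-threaded with a zero filler before the parameters. *)
Lemma thread_base_args L l a b : length L = S (S K) ->
  (forall j, j < K -> nth j L 0 = nth j l 0) -> nth K L 0 = a -> nth (S K) L 0 = b ->
  pad (K - 1) (tl L) ++ [0; nth (K - 1) (tl L) 0; nth K (tl L) 0]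
  = pad K (pad (K - 1) (tl l)) ++ [a; b].
Proof.
  intros HLen HL0 HLa HLb.
  apply thread_args_eq; rewrite ?length_app, ?length_pad; simpl; try lia.
  - intros j Hj. destruct (Nat.ltb_spec j (K - 1)).
    + rewrite app_nth1 by (rewrite length_pad; lia). rewrite !nth_pad.
      destruct (Nat.ltb_spec j (K - 1)); [|lia]. rewrite !nth_tl. apply HL0. lia.
    + rewrite app_nth2 by (rewrite length_pad; lia). rewrite length_pad.
      replace (j - (K - 1)) with 0 by lia. simpl. rewrite nth_pad.
      destruct (Nat.ltb_spec j (K - 1)); [lia|auto].
  - rewrite app_nth2 by (rewrite length_pad; lia). rewrite length_pad.
    replace (K - (K - 1)) with 1 by lia. simpl. rewrite nth_tl.
    replace (S (K - 1)) with K by lia. auto.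
  - rewrite app_nth2 by (rewrite length_pad; lia). rewrite length_pad.
    replace (S K - (K - 1)) with 2 by lia. simpl. rewrite nth_tl. auto.
Qed.

Definition thread_correct (p : pr) := threadable K p = true -> forall o l a b,
  pr_eval o (thread p) (pad K l ++ [a; b]) = pr_eval (fun j => pr_eval o Q [j; a; b]) p l.

Lemma thread_correct_comp f gs :
  thread_correct f -> Forall thread_correct gs -> thread_correct (PComp f gs).
Proof.
  intros IHf IHgs Hok o l a b. cbn [threadable] in Hok.
  apply andb_prop in Hok as [Hf Hg]. rewrite forallb_forall in Hg. rewrite Forall_forall in IHgs.
  simpl thread. rewrite !pr_eval_comp, map_app. cbn [map pr_eval].
  rewrite nth_thread_K, nth_thread_SK.
  replace (map (fun g => pr_eval o g (pad K l ++ [a; b])) (pad_schemes (map thread gs)))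
    with (pad K (map (fun g => pr_eval (fun j => pr_eval o Q [j; a; b]) g l) gs)).
  - apply IHf; auto.
  - unfold pad_schemes, pad. rewrite map_map. apply map_ext_in. intros j _.
    destruct (Nat.ltb_spec j (length gs)).
    + rewrite !(nth_map_lt _ _ _ _ PZero) by auto.
      symmetry. apply IHgs; [apply nth_In; auto| apply Hg, nth_In; auto].
    + rewrite !nth_overflow by (rewrite length_map; lia). reflexivity.
Qed.

(** In the recursion case the counter and previous value are pushed in front,
    so the parameters move to positions [K + 2] and [K + 3] and the step is
    re-threaded by projections; the base case sees a list of width [K - 1]. *)
Lemma thread_correct_rec g h :
  thread_correct g -> thread_correct h -> thread_correct (PRec g h).
Proof.
  intros IHg IHh Hok o l a b. cbn [threadable] in Hok.
  apply andb_prop in Hok as [Hok Hh]. apply andb_prop in Hok as [Hm Hg]. apply Nat.leb_le in Hm.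
  simpl thread. rewrite !pr_eval_rec, nth_thread_args. destruct (Nat.ltb_spec 0 K); [|lia].
  pose proof (nth_thread_K l a b) as HLa. pose proof (nth_thread_SK l a b) as HLb.
  set (L0 := pad K l ++ [a; b]) in *.
  assert (HL0 : forall j, j < K -> nth j L0 0 = nth j l 0).
  { intros j Hj. unfold L0. rewrite nth_thread_args. destruct (Nat.ltb_spec j K); [auto|lia]. }
  assert (HLen : length L0 = S (S K)) by (unfold L0; rewrite length_app, length_pad; simpl; lia).
  clearbody L0.
  generalize (nth 0 l 0). induction n; cbn [rec_iter].
  - rewrite pr_eval_comp, map_app, map_eval_proj. cbn [map pr_eval].
    transitivity (pr_eval (fun j => pr_eval o Q [j; a; b]) g (pad (K - 1) (tl l))).
    + rewrite <- IHg by auto. f_equal. apply thread_base_args; auto.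
    + apply read_width_spec. intros j Hj. rewrite nth_pad.
      destruct (Nat.ltb_spec j (K - 1)); [auto|lia].
  - rewrite pr_eval_comp, map_app, map_eval_proj, IHn.
    set (X := rec_iter _ g h (tl l) n).
    rewrite <- IHh by auto. f_equal. cbn [map pr_eval].
    replace (nth (S K) (n :: X :: tl L0) 0) with a
      by (destruct K as [|[|K']]; [lia|lia|]; simpl; rewrite nth_tl; auto).
    replace (nth (S (S K)) (n :: X :: tl L0) 0) with b by (simpl; rewrite nth_tl; auto).
    f_equal. apply pad_ext. intros j Hj. destruct j as [|[|t]]; simpl; auto.
    rewrite !nth_tl. apply HL0. lia.
Qed.

Theorem thread_spec : forall p, thread_correct p.
Proof.
  induction p using pr_ind_nested.
  - intros _ o l a b. reflexivity.
  - intros _ o l a b. simpl thread. cbn [pr_eval]. rewrite nth_thread_args.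
    destruct (Nat.ltb_spec 0 K); [auto| lia].
  - intros Hok o l a b. simpl thread. cbn [pr_eval]. rewrite nth_thread_args.
    cbn [threadable] in Hok. rewrite Hok. reflexivity.
  - apply thread_correct_comp; auto.
  - apply thread_correct_rec; auto.
  - intros _ o l a b. simpl thread. rewrite pr_eval_comp. cbn [map pr_eval].
    rewrite nth_thread_args, nth_thread_K, nth_thread_SK.
    destruct (Nat.ltb_spec 0 K); [reflexivity|lia].
Qed.

End Threading.

(** ** Oracle-free majorants of schemes on dyadically bounded oracles

    For every scheme [p] we build an oracle-free scheme [majorant p], monotone
    in its arguments, such that for every oracle bounded by [j |-> 2^j] the
    value of [p] is at most [majorant p], and [p] only queries the oracle at
    indices at most [majorant p]: two bounded oracles agreeing up to the
    majorant give the same value.  The oracle itself is majorised by [2^j],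
    and compositions and recursions add up the majorants of their parts. *)

Section Majorant.
Local Open Scope nat_scope.

Definition POW2 := compile 1 (epow (econst 2) (EVar 0)).
Lemma POW2_sem l : pr_eval o0 POW2 l = 2 ^ nth 0 l 0.
Proof. unfold POW2. rewrite compile_correct, den_pow, den_const. reflexivity. Qed.

Fixpoint majorant (p : pr) : pr :=
  match p with
  | PZero => PZero | PSucc => PSucc | PProj i => PProj i | POrc => POW2
  | PComp f gs => PComp ADD [PComp (majorant f) (map majorant gs);
       (fix sum_of l := match l with
                        | [] => PZero
                        | g :: l' => PComp ADD [majorant g; sum_of l'] end) gs]
  | PRec g h => PRec (majorant g) (PComp ADD [majorant h; PProj 1])
  end.

Definition eval0 p l := pr_eval o0 p l.

Lemma majorant_comp f gs l : eval0 (majorant (PComp f gs)) l =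
  eval0 (majorant f) (map (fun g => eval0 (majorant g) l) gs)
  + list_sum (map (fun g => eval0 (majorant g) l) gs).
Proof.
  unfold eval0. cbn [majorant]. rewrite pr_eval_comp. cbn [map]. rewrite ADD_sem.
  rewrite (pr_eval_comp o0 (majorant f)), map_map. f_equal.
  induction gs; cbn [map list_sum]; auto.
  rewrite pr_eval_comp. cbn [map]. rewrite ADD_sem, IHgs. reflexivity.
Qed.

Fixpoint majorant_iter g h rest k :=
  match k with
  | 0 => eval0 (majorant g) rest
  | S k' => eval0 (majorant h) (k' :: majorant_iter g h rest k' :: rest) + majorant_iter g h rest k'
  end.

Lemma majorant_rec g h l : eval0 (majorant (PRec g h)) l = majorant_iter g h (tl l) (nth 0 l 0).
Proof.
  unfold eval0. cbn [majorant]. rewrite pr_eval_rec.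
  induction (nth 0 l 0); cbn [rec_iter majorant_iter]; auto.
  rewrite pr_eval_comp. cbn [map]. rewrite ADD_sem, IHn. reflexivity.
Qed.

Lemma majorant_oracle_free : forall p, oracle_free (majorant p) = true.
Proof.
  assert (HA : oracle_free ADD = true) by reflexivity.
  assert (HP : oracle_free POW2 = true) by reflexivity.
  induction p using pr_ind_nested; cbn [majorant]; auto.
  - rewrite oracle_free_comp, HA. cbn [forallb]. rewrite (oracle_free_comp (majorant p)), IHp.
    rewrite andb_true_r. simpl andb. rewrite Forall_forall in H. apply andb_true_intro; split.
    + rewrite forallb_forall. intros x Hx. apply in_map_iff in Hx as [g [<- Hg]]. auto.
    + induction gs; auto. rewrite oracle_free_comp, HA. cbn [forallb].
      rewrite H, IHgs; simpl; auto. intros x Hx. apply H. simpl. auto.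
  - rewrite oracle_free_rec, IHp1, oracle_free_comp, HA. cbn [forallb]. rewrite IHp2. reflexivity.
Qed.

Definition list_le (l l' : list nat) := forall j, nth j l 0 <= nth j l' 0.

(** The oracles that occur as names of points of [0,1]. *)
Definition dyadic_bounded (o : nat -> nat) := forall j, o j <= 2 ^ j.

Lemma list_le_map {A} (F G : A -> nat) xs :
  (forall x, In x xs -> F x <= G x) -> list_le (map F xs) (map G xs).
Proof.
  intros H j. revert j. induction xs; intros j; simpl. { destruct j; auto. }
  destruct j; simpl; [apply H; simpl; auto| apply IHxs; intros; apply H; simpl; auto].
Qed.

Lemma list_le_tl l l' : list_le l l' -> list_le (tl l) (tl l').
Proof. intros H j. rewrite !nth_tl. apply H. Qed.

Lemma list_le_cons a b l l' : a <= b -> list_le l l' -> list_le (a :: l) (b :: l').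
Proof. intros H1 H2 [|j]; simpl; auto. Qed.

Lemma list_sum_le {A} (F G : A -> nat) xs :
  (forall x, In x xs -> F x <= G x) -> list_sum (map F xs) <= list_sum (map G xs).
Proof.
  induction xs; simpl; intros H; auto.
  specialize (IHxs (fun x H' => H x (or_intror H'))). specialize (H a (or_introl eq_refl)). lia.
Qed.

Lemma in_le_sum {A} (F : A -> nat) xs x : In x xs -> F x <= list_sum (map F xs).
Proof. induction xs; simpl; [tauto|]. intros [<-|H]; [lia|]. specialize (IHxs H). lia. Qed.

Lemma pow_ge n : n <= 2 ^ n.
Proof. pose proof (Nat.pow_gt_lin_r 2 n ltac:(lia)). lia. Qed.

Definition majorant_mono p :=
  forall l l', list_le l l' -> eval0 (majorant p) l <= eval0 (majorant p) l'.

Definition majorant_bounds p := forall o1 o2 l l',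
  dyadic_bounded o1 -> dyadic_bounded o2 -> list_le l l' ->
  (forall j, j <= eval0 (majorant p) l' -> o1 j = o2 j) ->
  pr_eval o1 p l = pr_eval o2 p l /\ pr_eval o1 p l <= eval0 (majorant p) l'.

Definition majorant_spec p := majorant_mono p /\ majorant_bounds p.

Lemma majorant_spec_comp f gs :
  majorant_spec f -> Forall majorant_spec gs -> majorant_spec (PComp f gs).
Proof.
  intros [IHm IHe] Hgs. rewrite Forall_forall in Hgs. split.
  - intros l l' Hl. rewrite !majorant_comp.
    assert (Hle : forall g, In g gs -> eval0 (majorant g) l <= eval0 (majorant g) l')
      by (intros g Hg; apply (Hgs g Hg); auto).
    pose proof (list_sum_le _ _ _ Hle). pose proof (IHm _ _ (list_le_map _ _ _ Hle)). lia.
  - intros o1 o2 l l' B1 B2 Hl Ha. rewrite majorant_comp in Ha |- *.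
    set (VM := map (fun g => eval0 (majorant g) l') gs) in *.
    assert (Hg : forall g, In g gs ->
      pr_eval o1 g l = pr_eval o2 g l /\ pr_eval o1 g l <= eval0 (majorant g) l').
    { intros g Hg. apply (Hgs g Hg); auto. intros j Hj. apply Ha.
      pose proof (in_le_sum (fun g => eval0 (majorant g) l') gs g Hg). fold VM in H. lia. }
    rewrite !pr_eval_comp.
    replace (map (fun g => pr_eval o2 g l) gs) with (map (fun g => pr_eval o1 g l) gs)
      by (apply map_ext_in; intros g Hg'; apply Hg; auto).
    assert (Hle : list_le (map (fun g => pr_eval o1 g l) gs) VM)
      by (apply list_le_map; intros g Hg'; apply Hg; auto).
    destruct (IHe o1 o2 _ _ B1 B2 Hle) as [E1 E2]; [intros j Hj; apply Ha; lia|].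
    split; auto. lia.
Qed.

Lemma majorant_iter_mono_rest g h rest rest' k : majorant_mono g -> majorant_mono h ->
  list_le rest rest' -> majorant_iter g h rest k <= majorant_iter g h rest' k.
Proof.
  intros Hg Hh Hr. induction k; cbn [majorant_iter]; auto.
  assert (Hl : list_le (k :: majorant_iter g h rest k :: rest) (k :: majorant_iter g h rest' k :: rest'))
    by (apply list_le_cons; auto; apply list_le_cons; auto).
  specialize (Hh _ _ Hl). lia.
Qed.

Lemma majorant_iter_mono_k g h rest k k' : k <= k' -> majorant_iter g h rest k <= majorant_iter g h rest k'.
Proof. induction 1; auto. cbn [majorant_iter]. lia. Qed.

Lemma majorant_spec_rec g h : majorant_spec g -> majorant_spec h -> majorant_spec (PRec g h).
Proof.
  intros [Mg Eg] [Mh Eh]. split.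
  - intros l l' Hl. rewrite !majorant_rec.
    eapply Nat.le_trans; [apply majorant_iter_mono_k, (Hl 0)|].
    apply majorant_iter_mono_rest, list_le_tl; auto.
  - intros o1 o2 l l' B1 B2 Hl Ha. rewrite majorant_rec in *. rewrite !pr_eval_rec.
    set (x' := nth 0 l' 0) in *. assert (Hx : nth 0 l 0 <= x') by apply Hl.
    set (R := majorant_iter g h (tl l')) in *.
    assert (Hstep : forall k, k <= x' -> rec_iter o1 g h (tl l) k = rec_iter o2 g h (tl l) k /\
                                       rec_iter o1 g h (tl l) k <= R k).
    { induction k; intros Hk; cbn [rec_iter].
      - apply Eg; auto using list_le_tl. intros j Hj. apply Ha.
        pose proof (majorant_iter_mono_k g h (tl l') 0 x' ltac:(lia)).
        cbn [majorant_iter] in *. unfold R. lia.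
      - destruct (IHk ltac:(lia)) as [E1 E2]. rewrite <- E1.
        destruct (Eh o1 o2 (k :: rec_iter o1 g h (tl l) k :: tl l) (k :: R k :: tl l') B1 B2)
          as [F1 F2].
        + apply list_le_cons; auto. apply list_le_cons; auto using list_le_tl.
        + intros j Hj. apply Ha.
          pose proof (majorant_iter_mono_k g h (tl l') (S k) x' Hk).
          cbn [majorant_iter] in *. unfold R in *. lia.
        + split; auto. unfold R. cbn [majorant_iter]. fold R. lia. }
    destruct (Hstep (nth 0 l 0) Hx) as [E1 E2]. split; auto.
    pose proof (majorant_iter_mono_k g h (tl l') _ _ Hx). unfold R in *. lia.
Qed.

Lemma majorant_spec_oracle : majorant_spec POrc.
Proof.
  split.
  - intros l l' H. unfold eval0. cbn [majorant]. rewrite !POW2_sem.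
    apply Nat.pow_le_mono_r; [lia| apply H].
  - intros o1 o2 l l' B1 B2 Hl Ha. unfold eval0 in *. cbn [majorant] in *.
    rewrite POW2_sem in *. cbn [pr_eval].
    assert (nth 0 l 0 <= nth 0 l' 0) by apply Hl.
    assert (2 ^ nth 0 l 0 <= 2 ^ nth 0 l' 0) by (apply Nat.pow_le_mono_r; lia).
    pose proof (pow_ge (nth 0 l 0)). specialize (B1 (nth 0 l 0)).
    split; [apply Ha|]; lia.
Qed.

Theorem majorant_correct : forall p, majorant_spec p.
Proof.
  induction p using pr_ind_nested.
  - split; intros ?; intros; unfold eval0; simpl; lia.
  - split; [intros l l' H | intros o1 o2 l l' _ _ H _]; unfold eval0; simpl;
      specialize (H 0); lia.
  - split; [intros l l' H | intros o1 o2 l l' _ _ H _]; unfold eval0; simpl; auto.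
  - apply majorant_spec_comp; auto.
  - apply majorant_spec_rec; auto.
  - apply majorant_spec_oracle.
Qed.

End Majorant.

(** ** Bernstein polynomials *)

Section Bernstein.
Local Open Scope R_scope.

Fixpoint sumR (f : nat -> R) (n : nat) : R := match n with O => 0 | S k => sumR f k + f k end.

Lemma sumR_ext f g n : (forall k, (k < n)%nat -> f k = g k) -> sumR f n = sumR g n.
Proof. induction n; simpl; intros; auto. rewrite IHn, H; auto. Qed.
Lemma sumR_plus f g n : sumR (fun k => f k + g k) n = sumR f n + sumR g n.
Proof. induction n; simpl; [lra| rewrite IHn; lra]. Qed.
Lemma sumR_minus f g n : sumR f n - sumR g n = sumR (fun k => f k - g k) n.
Proof. induction n; simpl; [ring|]. rewrite <- IHn. ring. Qed.
Lemma sumR_scal c f n : sumR (fun k => c * f k) n = c * sumR f n.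
Proof. induction n; simpl; [lra| rewrite IHn; lra]. Qed.
Lemma sumR_shift f n : sumR f (S n) = f O + sumR (fun k => f (S k)) n.
Proof.
  induction n; [simpl; lra|].
  change (sumR f (S (S n))) with (sumR f (S n) + f (S n)). rewrite IHn. simpl. lra.
Qed.
Lemma sumR_le f g n : (forall k, (k < n)%nat -> f k <= g k) -> sumR f n <= sumR g n.
Proof.
  induction n; simpl; intros H; [lra|].
  pose proof (H n (Nat.lt_succ_diag_r n)).
  pose proof (IHn (fun k Hk => H k (Nat.lt_lt_succ_r _ _ Hk))). lra.
Qed.
Lemma sumR_abs f n : Rabs (sumR f n) <= sumR (fun k => Rabs (f k)) n.
Proof. induction n; simpl. rewrite Rabs_R0; lra. eapply Rle_trans. apply Rabs_triang. lra. Qed.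
Lemma INR_sumN f n : INR (sumN f n) = sumR (fun k => INR (f k)) n.
Proof. induction n; simpl sumN; simpl sumR; [reflexivity|]. rewrite plus_INR, IHn. reflexivity. Qed.

Definition bern_basis (N k : nat) (a b : R) := INR (binom N k) * a ^ k * b ^ (N - k).

Lemma bern_basis_S0 N a b : bern_basis (S N) 0 a b = b * bern_basis N 0 a b.
Proof. unfold bern_basis. rewrite !binom_n0. simpl. rewrite Nat.sub_0_r. ring. Qed.

Lemma bern_basis_SS N k a b :
  bern_basis (S N) (S k) a b = a * bern_basis N k a b + b * bern_basis N (S k) a b.
Proof.
  unfold bern_basis. simpl binom. rewrite plus_INR.
  destruct (Nat.le_gt_cases (S k) N).
  - replace (S N - S k)%nat with (S (N - S k)) by lia.
    replace (N - k)%nat with (S (N - S k)) by lia. simpl. ring.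
  - rewrite (binom_over N (S k)) by lia. simpl INR.
    replace (S N - S k)%nat with (N - k)%nat by lia. simpl. ring.
Qed.

Lemma bern_basis_over N a b : bern_basis N (S N) a b = 0.
Proof. unfold bern_basis. rewrite binom_over by lia. simpl. ring. Qed.

Lemma bern_basis_nonneg N k x : 0 <= x <= 1 -> 0 <= bern_basis N k x (1 - x).
Proof.
  intros. unfold bern_basis.
  apply Rmult_le_pos; [apply Rmult_le_pos|]; [apply pos_INR| apply pow_le; lra| apply pow_le; lra].
Qed.

(** [bern_sum N a b g = sum_(k <= N) g k C(N,k) a^k b^(N-k)]; for [b = 1 - a]
    this is the Bernstein polynomial of the sample values [g]. *)
Definition bern_sum (N : nat) (a b : R) (g : nat -> R) :=
  sumR (fun k => g k * bern_basis N k a b) (S N).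

(** Pascal's rule lifted to Bernstein sums: the recursion behind all moments. *)
Lemma bern_sum_S N a b g :
  bern_sum (S N) a b g = a * bern_sum N a b (fun k => g (S k)) + b * bern_sum N a b g.
Proof.
  unfold bern_sum. rewrite (sumR_shift _ (S N)), bern_basis_S0.
  rewrite (sumR_ext _ (fun k => a * (g (S k) * bern_basis N k a b)
                               + b * (g (S k) * bern_basis N (S k) a b)))
    by (intros; rewrite bern_basis_SS; ring).
  rewrite sumR_plus, !sumR_scal, (sumR_shift (fun k => g k * bern_basis N k a b) N).
  change (sumR (fun k => g (S k) * bern_basis N (S k) a b) (S N)) with
    (sumR (fun k => g (S k) * bern_basis N (S k) a b) N + g (S N) * bern_basis N (S N) a b).
  rewrite bern_basis_over. ring.
Qed.

Lemma bern_sum_ext N a b g h :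
  (forall k, (k <= N)%nat -> g k = h k) -> bern_sum N a b g = bern_sum N a b h.
Proof. intros H. unfold bern_sum. apply sumR_ext. intros. rewrite H; auto. lia. Qed.

Lemma bern_sum_lin N a b g h c d :
  bern_sum N a b (fun k => c * g k + d * h k) = c * bern_sum N a b g + d * bern_sum N a b h.
Proof.
  unfold bern_sum.
  rewrite (sumR_ext _ (fun k => c * (g k * bern_basis N k a b) + d * (h k * bern_basis N k a b)))
    by (intros; ring).
  rewrite sumR_plus, !sumR_scal. ring.
Qed.

Lemma bern_sum_one N a b : bern_sum N a b (fun _ => 1) = (a + b) ^ N.
Proof.
  induction N.
  - unfold bern_sum, bern_basis. simpl. ring.
  - rewrite bern_sum_S, IHN. simpl. ring.
Qed.

Lemma bern_sum_id N x : bern_sum N x (1 - x) INR = INR N * x.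
Proof.
  induction N.
  - unfold bern_sum, bern_basis. simpl. ring.
  - rewrite bern_sum_S.
    rewrite (bern_sum_ext _ _ _ (fun k => INR (S k)) (fun k => 1 * INR k + 1 * 1))
      by (intros; rewrite S_INR; ring).
    rewrite bern_sum_lin, bern_sum_one, IHN. replace (x + (1 - x)) with 1 by ring.
    rewrite pow1, S_INR. ring.
Qed.

Lemma bern_sum_sq N x :
  bern_sum N x (1 - x) (fun k => INR k * INR k) = INR N * x + INR N * (INR N - 1) * x * x.
Proof.
  induction N.
  - unfold bern_sum, bern_basis. simpl. ring.
  - rewrite bern_sum_S.
    rewrite (bern_sum_ext _ _ _ (fun k => INR (S k) * INR (S k))
               (fun k => 1 * (INR k * INR k) + 1 * (2 * INR k + 1 * 1)))
      by (intros; rewrite S_INR; ring).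
    rewrite !bern_sum_lin, IHN, bern_sum_one, bern_sum_id.
    replace (x + (1 - x)) with 1 by ring. rewrite pow1, S_INR. ring.
Qed.

Lemma bern_sum_var N x : bern_sum N x (1 - x) (fun k => (INR k - INR N * x) ^ 2) = INR N * x * (1 - x).
Proof.
  rewrite (bern_sum_ext _ _ _ _ (fun k => 1 * (INR k * INR k)
             + 1 * ((- 2 * INR N * x) * INR k + (INR N * INR N * x * x) * 1)))
    by (intros; ring).
  rewrite !bern_sum_lin, bern_sum_sq, bern_sum_id, bern_sum_one.
  replace (x + (1 - x)) with 1 by ring. rewrite pow1. ring.
Qed.

Lemma bern_sum_mono N x g h : 0 <= x <= 1 -> (forall k, (k <= N)%nat -> g k <= h k) ->
  bern_sum N x (1 - x) g <= bern_sum N x (1 - x) h.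
Proof.
  intros Hx H. unfold bern_sum. apply sumR_le. intros k Hk.
  apply Rmult_le_compat_r; [apply bern_basis_nonneg; auto| apply H; lia].
Qed.

Lemma bern_sum_abs N x g : 0 <= x <= 1 ->
  Rabs (bern_sum N x (1 - x) g) <= bern_sum N x (1 - x) (fun k => Rabs (g k)).
Proof.
  intros Hx. unfold bern_sum. eapply Rle_trans; [apply sumR_abs|]. apply sumR_le. intros k _.
  rewrite Rabs_mult, (Rabs_right (bern_basis N k x (1 - x))); [lra|].
  apply Rle_ge, bern_basis_nonneg; auto.
Qed.

Section Approximation.
Variables (F : R -> R) (v : nat -> R) (N : nat) (x eps delta eta Mb : R).
Hypothesis HN : (1 <= N)%nat.
Hypothesis Hdelta : 0 < delta.
Hypothesis Heps : 0 <= eps.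
Hypothesis Hsample : forall k, (k <= N)%nat -> Rabs (v k - F (INR k / INR N)) <= eta.
Hypothesis Hmod : forall k, (k <= N)%nat ->
  Rabs (INR k / INR N - x) <= delta -> Rabs (F (INR k / INR N) - F x) <= eps.
Hypothesis Hosc : forall k, (k <= N)%nat -> Rabs (F (INR k / INR N) - F x) <= 2 * Mb.

(** Pointwise: close samples are within [eta + eps]; far samples are
    controlled by the squared distance (Chebyshev's trick). *)
Lemma bernstein_pointwise k : (k <= N)%nat ->
  Rabs (v k - F x) <= (eta + eps) * 1
    + (2 * Mb / delta ^ 2 / (INR N * INR N)) * (INR k - INR N * x) ^ 2.
Proof.
  intros Hk. assert (HNr : 1 <= INR N) by (apply (le_INR 1); auto).
  set (c := 2 * Mb / delta ^ 2).
  assert (Hc : 0 <= Mb).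
  { specialize (Hosc 0%nat ltac:(lia)). pose proof (Rabs_pos (F (INR 0 / INR N) - F x)). lra. }
  assert (Hvk : Rabs (v k - F x) <= eta + Rabs (F (INR k / INR N) - F x)).
  { replace (v k - F x) with ((v k - F (INR k / INR N)) + (F (INR k / INR N) - F x)) by ring.
    eapply Rle_trans; [apply Rabs_triang|]. specialize (Hsample k Hk). lra. }
  assert (Hsq : c / (INR N * INR N) * (INR k - INR N * x) ^ 2 = c * (INR k / INR N - x) ^ 2)
    by (field; lra).
  assert (0 <= c) by (unfold c, Rdiv; apply Rmult_le_pos; [lra| left; apply Rinv_0_lt_compat, pow_lt; lra]).
  pose proof (pow2_ge_0 (INR k / INR N - x)).
  destruct (Rle_lt_dec (Rabs (INR k / INR N - x)) delta) as [Hle|Hlt].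
  - specialize (Hmod k Hk Hle). nra.
  - assert (delta ^ 2 < (INR k / INR N - x) ^ 2).
    { rewrite <- (pow2_abs (INR k / INR N - x)). pose proof (Rabs_pos (INR k / INR N - x)). nra. }
    assert (2 * Mb <= c * (INR k / INR N - x) ^ 2).
    { unfold c. apply Rmult_le_reg_r with (r := delta ^ 2); [apply pow_lt; lra|].
      replace (2 * Mb / delta ^ 2 * (INR k / INR N - x) ^ 2 * delta ^ 2)
        with (2 * Mb * (INR k / INR N - x) ^ 2) by (field; lra).
      nra. }
    specialize (Hosc k Hk). fold c. rewrite Hsq. lra.
Qed.

Lemma bernstein_approx : 0 <= x <= 1 ->
  Rabs (bern_sum N x (1 - x) v - F x) <= eta + eps + Mb / (2 * INR N * delta ^ 2).
Proof.
  intros Hx. assert (HNr : 1 <= INR N) by (apply (le_INR 1); auto).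
  assert (E1 : bern_sum N x (1 - x) (fun _ => 1) = 1)
    by (rewrite bern_sum_one; replace (x + (1 - x)) with 1 by ring; apply pow1).
  replace (bern_sum N x (1 - x) v - F x)
    with (bern_sum N x (1 - x) (fun k => 1 * v k + (- F x) * 1)) by (rewrite bern_sum_lin, E1; ring).
  eapply Rle_trans; [apply bern_sum_abs; auto|].
  eapply Rle_trans.
  { apply bern_sum_mono; auto. intros k Hk.
    replace (1 * v k + - F x * 1) with (v k - F x) by ring. apply (bernstein_pointwise k Hk). }
  rewrite bern_sum_lin, E1, bern_sum_var.
  assert (x * (1 - x) <= / 4) by (pose proof (pow2_ge_0 (x - / 2)); simpl in *; nra).
  assert (Hc : 0 <= Mb).
  { specialize (Hosc 0%nat ltac:(lia)). pose proof (Rabs_pos (F (INR 0 / INR N) - F x)). lra. }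
  replace (2 * Mb / delta ^ 2 / (INR N * INR N) * (INR N * x * (1 - x)))
    with ((2 * Mb / (INR N * delta ^ 2)) * (x * (1 - x))) by (field; repeat split; lra).
  replace (Mb / (2 * INR N * delta ^ 2)) with ((2 * Mb / (INR N * delta ^ 2)) * / 4)
    by (field; repeat split; lra).
  assert (0 <= 2 * Mb / (INR N * delta ^ 2)).
  { apply Rmult_le_pos; [lra|]. apply Rlt_le, Rinv_0_lt_compat.
    apply Rmult_lt_0_compat; [lra| apply pow_lt; lra]. }
  nra.
Qed.

End Approximation.

Lemma double_sum (F : nat -> nat -> R) N :
  sumR (fun m => sumR (fun k => F k (m - k)%nat) (S m)) (S N)
  = sumR (fun k => sumR (fun j => F k j) (S (N - k))) (S N).
Proof.
  induction N; [simpl; ring|].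
  change (sumR (fun m => sumR (fun k => F k (m - k)%nat) (S m)) (S (S N))) with
    (sumR (fun m => sumR (fun k => F k (m - k)%nat) (S m)) (S N)
     + sumR (fun k => F k (S N - k)%nat) (S (S N))).
  rewrite IHN.
  change (sumR (fun k => sumR (fun j => F k j) (S (S N - k))) (S (S N))) with
    (sumR (fun k => sumR (fun j => F k j) (S (S N - k))) (S N)
     + sumR (fun j => F (S N) j) (S (S N - S N))).
  rewrite (sumR_ext (fun k => sumR (fun j => F k j) (S (S N - k)))
             (fun k => sumR (fun j => F k j) (S (N - k)) + F k (S (N - k))))
    by (intros k Hk; replace (S N - k)%nat with (S (N - k)) by lia; reflexivity).
  rewrite sumR_plus, Nat.sub_diag.
  change (sumR (fun k => F k (S N - k)%nat) (S (S N))) with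
    (sumR (fun k => F k (S N - k)%nat) (S N) + F (S N) (S N - S N)%nat).
  rewrite Nat.sub_diag.
  rewrite (sumR_ext (fun k => F k (S N - k)%nat) (fun k => F k (S (N - k))))
    by (intros k Hk; f_equal; lia).
  change (sumR (fun j => F (S N) j) 1) with (0 + F (S N) 0%nat). ring.
Qed.

Lemma pow_one_minus n x : (1 - x) ^ n = sumR (fun j => INR (binom n j) * (-1) ^ j * x ^ j) (S n).
Proof.
  pose proof (bern_sum_one n (- x) 1) as H. replace (- x + 1) with (1 - x) in H by ring.
  rewrite <- H. unfold bern_sum, bern_basis. apply sumR_ext. intros k _. rewrite pow1.
  replace (- x) with ((-1) * x) by ring. rewrite Rpow_mult_distr. ring.
Qed.

Definition mono_coef (N : nat) (w : nat -> R) (m : nat) :=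
  sumR (fun k => w k * INR (binom N k) * INR (binom (N - k) (m - k)) * (-1) ^ (m - k)) (S m).

Lemma mono_coef_spec N w x : sumR (fun m => mono_coef N w m * x ^ m) (S N) = bern_sum N x (1 - x) w.
Proof.
  unfold mono_coef.
  set (F := fun k j => w k * INR (binom N k) * INR (binom (N - k) j) * (-1) ^ j * x ^ (k + j)).
  rewrite (sumR_ext (fun m => sumR _ (S m) * x ^ m) (fun m => sumR (fun k => F k (m - k)%nat) (S m))).
  2:{ intros m Hm. rewrite Rmult_comm, <- sumR_scal. apply sumR_ext. intros k Hk. unfold F.
      replace (k + (m - k))%nat with m by lia. ring. }
  rewrite (double_sum F). unfold bern_sum, bern_basis. apply sumR_ext. intros k Hk.
  rewrite pow_one_minus, <- !sumR_scal. apply sumR_ext. intros j Hj. unfold F. rewrite pow_add. ring.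
Qed.

Lemma poly_eval_seq (g : nat -> R) x : forall n s,
  poly_eval (map g (seq s n)) x = sumR (fun t => g (s + t)%nat * x ^ t) n.
Proof.
  induction n; intros s; [reflexivity|].
  change (poly_eval (map g (seq s (S n))) x) with (g s + x * poly_eval (map g (seq (S s) n)) x).
  rewrite IHn, sumR_shift, Nat.add_0_r, <- sumR_scal.
  rewrite (sumR_ext (fun k => g (s + S k)%nat * x ^ S k) (fun t => x * (g (S s + t)%nat * x ^ t)))
    by (intros; replace (s + S k)%nat with (S s + k)%nat by lia; simpl; ring).
  simpl. ring.
Qed.

End Bernstein.

Section Names.
Local Open Scope R_scope.

Lemma pow2_pos j : 0 < 2 ^ j.
Proof. apply pow_lt. lra. Qed.

Lemma INR_pow2 e : INR (2 ^ e) = 2 ^ e.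
Proof. rewrite pow_INR. reflexivity. Qed.

Definition nfloor (t : R) : nat := Z.to_nat (up t - 1).

Lemma nfloor_spec t : 0 <= t -> INR (nfloor t) <= t < INR (nfloor t) + 1.
Proof.
  intros Ht. destruct (archimed t) as [H1 H2].
  assert (Hp : (0 < up t)%Z) by (apply lt_IZR; simpl; lra).
  unfold nfloor. rewrite INR_IZR_INZ, Z2Nat.id by lia. rewrite minus_IZR. simpl. lra.
Qed.

Lemma div_floor p q : (0 < q)%nat -> INR (p / q) <= INR p / INR q < INR (p / q) + 1.
Proof.
  intros Hq. pose proof (Nat.div_mod p q ltac:(lia)). pose proof (Nat.mod_upper_bound p q ltac:(lia)).
  assert (Hq' : 0 < INR q) by (apply lt_0_INR; auto).
  assert (INR p = INR q * INR (p / q) + INR (p mod q))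
    by (rewrite H at 1; rewrite plus_INR, mult_INR; auto).
  assert (INR (p mod q) < INR q) by (apply lt_INR; auto). pose proof (pos_INR (p mod q)).
  split.
  - apply Rmult_le_reg_r with (INR q); auto. unfold Rdiv. rewrite Rmult_assoc, Rinv_l by lra. nra.
  - apply Rmult_lt_reg_r with (INR q); auto. unfold Rdiv. rewrite Rmult_assoc, Rinv_l by lra. nra.
Qed.

Lemma div_bounds m x p : 0 < p -> INR m <= x * p < INR m + 1 -> x - / p < INR m / p <= x.
Proof.
  intros Hp [H1 H2]. set (y := INR m / p). assert (Hy : y * p = INR m) by (unfold y; field; lra).
  assert (Hi : / p * p = 1) by (field; lra). assert (0 < / p) by (apply Rinv_0_lt_compat; auto).
  split; nra.
Qed.

Lemma inv_pow2_small eps : 0 < eps -> exists N, forall n, (n >= N)%nat -> / 2 ^ n < eps.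
Proof.
  intros He. destruct (archimed (/ eps)) as [H1 _].
  assert (0 < / eps) by (apply Rinv_0_lt_compat; auto).
  exists (Z.to_nat (up (/ eps))). intros n Hn.
  assert (INR n < 2 ^ n).
  { rewrite <- INR_pow2. apply lt_INR, Nat.pow_gt_lin_r. lia. }
  assert (/ eps < INR n).
  { assert (Hp : (0 < up (/ eps))%Z) by (apply lt_IZR; simpl; lra).
    apply le_INR in Hn. rewrite INR_IZR_INZ, Z2Nat.id in Hn by lia. lra. }
  rewrite <- (Rinv_inv eps). apply Rinv_lt_contravar; [|lra].
  apply Rmult_lt_0_compat; auto. apply pow2_pos.
Qed.

Lemma floors_are_name x m : 0 <= x <= 1 ->
  (forall j, INR (m j) <= x * 2 ^ j < INR (m j) + 1) -> is_name x m.
Proof.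
  intros Hx Hm. split; [|split].
  - intros i. apply INR_le. rewrite INR_pow2. destruct (Hm i). pose proof (pow2_pos i). nra.
  - intros i. pose proof (div_bounds _ _ _ (pow2_pos i) (Hm i)).
    pose proof (div_bounds _ _ _ (pow2_pos (S i)) (Hm (S i))).
    assert (/ 2 ^ S i = / 2 * / 2 ^ i) by (simpl; field; apply pow_nonzero; lra).
    assert (0 < / 2 ^ i) by (apply Rinv_0_lt_compat, pow2_pos).
    apply Rabs_def1; lra.
  - intros eps He. destruct (inv_pow2_small eps He) as [N HN]. exists N. intros n Hn.
    pose proof (div_bounds _ _ _ (pow2_pos n) (Hm n)). specialize (HN n Hn). unfold R_dist.
    assert (0 < / 2 ^ n) by (apply Rinv_0_lt_compat, pow2_pos).
    apply Rabs_def1; lra.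
Qed.

Definition floor_name (x : R) (j : nat) : nat := nfloor (x * 2 ^ j).

Lemma floor_name_bounds x j : 0 <= x <= 1 ->
  INR (floor_name x j) <= x * 2 ^ j < INR (floor_name x j) + 1.
Proof. intros Hx. apply nfloor_spec. pose proof (pow2_pos j). nra. Qed.

Lemma floor_name_spec x : 0 <= x <= 1 -> is_name x (floor_name x).
Proof. intros Hx. apply floors_are_name; auto. intros j. apply floor_name_bounds; auto. Qed.

Lemma floor_name_approx x j : 0 <= x <= 1 -> x - / 2 ^ j < INR (floor_name x j) / 2 ^ j <= x.
Proof. intros Hx. apply div_bounds; [apply pow2_pos| apply floor_name_bounds; auto]. Qed.

Definition dyadic_name (k d : nat) (j : nat) := (k * 2 ^ j / 2 ^ d)%nat.

Lemma dyadic_node_range k d : (k <= 2 ^ d)%nat -> 0 <= INR k / 2 ^ d <= 1.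
Proof.
  intros Hk. assert (Hd : 0 < 2 ^ d) by apply pow2_pos.
  assert (Hk' : INR k <= 2 ^ d) by (rewrite <- INR_pow2; apply le_INR; auto).
  split; [apply Rmult_le_pos; [apply pos_INR| left; apply Rinv_0_lt_compat; auto]|].
  apply Rmult_le_reg_r with (2 ^ d); auto. unfold Rdiv. rewrite Rmult_assoc, Rinv_l by lra. lra.
Qed.

Lemma dyadic_name_spec k d : (k <= 2 ^ d)%nat -> is_name (INR k / 2 ^ d) (dyadic_name k d).
Proof.
  intros Hk. assert (Hd : 0 < 2 ^ d) by apply pow2_pos.
  apply floors_are_name; [apply dyadic_node_range; auto|].
  intros j. unfold dyadic_name.
  pose proof (div_floor (k * 2 ^ j) (2 ^ d) ltac:(apply Nat.neq_0_lt_0, Nat.pow_nonzero; lia)).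
  rewrite mult_INR, !INR_pow2 in H.
  replace (INR k / 2 ^ d * 2 ^ j) with (INR k * 2 ^ j / 2 ^ d) by (field; lra). lra.
Qed.

Lemma hybrid_name x y B : 0 <= y <= x -> x <= 1 -> x - y <= / 2 ^ (B + 2) ->
  is_name y (fun j => if (j <=? B)%nat then floor_name x j else floor_name y j).
Proof.
  intros Hy Hx Hxy.
  assert (Hx' : 0 <= x <= 1) by lra. assert (Hy' : 0 <= y <= 1) by lra.
  destruct (floor_name_spec x Hx') as [Bx [Fx Cx]]. destruct (floor_name_spec y Hy') as [By [Fy Cy]].
  split; [|split].
  - intros j. destruct (j <=? B)%nat; auto.
  - intros j. destruct (Nat.leb_spec j B); destruct (Nat.leb_spec (S j) B); auto; try lia.
    assert (j = B) by lia. subst j.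
    pose proof (floor_name_approx x B Hx'). pose proof (floor_name_approx y (S B) Hy').
    assert (/ 2 ^ S B = / 2 * / 2 ^ B) by (simpl; field; apply pow_nonzero; lra).
    assert (/ 2 ^ (B + 2) = / 4 * / 2 ^ B) by (rewrite pow_add; simpl; field; apply pow_nonzero; lra).
    assert (0 < / 2 ^ B) by (apply Rinv_0_lt_compat, pow2_pos).
    apply Rabs_def1; lra.
  - intros eps He. destruct (Cy eps He) as [N HN]. exists (Nat.max N (S B)). intros n Hn.
    destruct (Nat.leb_spec n B); [lia|]. apply HN. lia.
Qed.

Lemma fast_cauchy_partial r n : fast_cauchy r ->
  forall k, Rabs (r n - r (n + k)%nat) <= 2 / 2 ^ n - 2 / 2 ^ (n + k).
Proof.
  intros Hr. induction k.
  - rewrite Nat.add_0_r. unfold Rminus. rewrite Rplus_opp_r, Rabs_R0. lra.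
  - replace (r n - r (n + S k)%nat) with ((r n - r (n + k)%nat) + (r (n + k)%nat - r (S (n + k))))
      by (rewrite Nat.add_succ_r; ring).
    eapply Rle_trans; [apply Rabs_triang|]. specialize (Hr (n + k)%nat).
    assert (2 / 2 ^ (n + S k) = / 2 ^ (n + k))
      by (rewrite Nat.add_succ_r; simpl; field; apply pow_nonzero; lra).
    assert (2 / 2 ^ (n + k) = 2 * / 2 ^ (n + k)) by (unfold Rdiv; ring). lra.
Qed.

Lemma fast_cauchy_err r L : fast_cauchy r -> Un_cv r L -> forall n, Rabs (r n - L) <= 2 / 2 ^ n.
Proof.
  intros Hr HL n. destruct (Rle_lt_dec (Rabs (r n - L)) (2 / 2 ^ n)) as [H|H]; auto. exfalso.
  destruct (HL (Rabs (r n - L) - 2 / 2 ^ n)) as [N HN]; [lra|].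
  specialize (HN (n + N)%nat ltac:(lia)). unfold R_dist in HN.
  pose proof (fast_cauchy_partial r n Hr N).
  assert (0 < 2 / 2 ^ (n + N))
    by (unfold Rdiv; apply Rmult_lt_0_compat; [lra| apply Rinv_0_lt_compat, pow2_pos]).
  assert (Rabs (r n - L) <= Rabs (r n - r (n + N)%nat) + Rabs (r (n + N)%nat - L)).
  { replace (r n - L) with ((r n - r (n + N)%nat) + (r (n + N)%nat - L)) by ring. apply Rabs_triang. }
  lra.
Qed.

Lemma rat_of_code_split v : rat_of_code v = (INR (rat_pos v) - INR (rat_neg v)) / INR (S (rat_den v)).
Proof. unfold rat_of_code, rat_pos, rat_neg, rat_den. destruct (unpair v) as [a r]. cbn [fst snd]. destruct (unpair r). reflexivity. Qed.

Lemma rat_of_code_bound c : Rabs (rat_of_code c) <= INR c.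
Proof.
  rewrite rat_of_code_split. unfold rat_pos, rat_neg, rat_den. pose proof (unpair_le c) as [Ha Hr].
  destruct (unpair c) as [a r]. cbn [fst snd] in Ha, Hr |- *. pose proof (unpair_le r) as [Hb Hc].
  destruct (unpair r) as [b cc]. cbn [fst snd] in Hb, Hc |- *.
  apply le_INR in Ha. apply le_INR in Hr. apply le_INR in Hb.
  assert (1 <= INR (S cc)) by (apply (le_INR 1); lia).
  unfold Rdiv. rewrite Rabs_mult, Rabs_inv, (Rabs_right (INR (S cc))) by lra.
  assert (Rabs (INR a - INR b) <= INR c).
  { pose proof (pos_INR a). pose proof (pos_INR b). apply Rabs_le. lra. }
  assert (0 < / INR (S cc) <= 1).
  { split. apply Rinv_0_lt_compat; lra. rewrite <- Rinv_1. apply Rinv_le_contravar; lra. }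
  pose proof (Rabs_pos (INR a - INR b)). nra.
Qed.

End Names.

Section Modulus.
Local Open Scope R_scope.

Definition computes (Phi : pr) (f : R -> R) := forall x : R, 0 <= x <= 1 -> forall m, is_name x m ->
  fast_cauchy (fun n => rat_of_code (pr_eval m Phi [n]))
  /\ Un_cv (fun n => rat_of_code (pr_eval m Phi [n])) (f x).

Variables (Phi : pr) (f : R -> R).
Hypothesis HPhi : computes Phi f.

Lemma computes_err x m n : 0 <= x <= 1 -> is_name x m ->
  Rabs (rat_of_code (pr_eval m Phi [n]) - f x) <= 2 / 2 ^ n.
Proof. intros Hx Hm. destruct (HPhi x Hx m Hm) as [H1 H2]. apply (fast_cauchy_err _ _ H1 H2 n). Qed.

Lemma name_bounded x m : is_name x m -> dyadic_bounded m.
Proof. intros [H _]. exact H. Qed.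

Definition query_bound n := eval0 (majorant Phi) [n].

Lemma output_depends_on_prefix m1 m2 n : dyadic_bounded m1 -> dyadic_bounded m2 ->
  (forall j, (j <= query_bound n)%nat -> m1 j = m2 j) -> pr_eval m1 Phi [n] = pr_eval m2 Phi [n].
Proof. intros B1 B2 Ha. apply (proj2 (majorant_correct Phi) m1 m2 [n] [n] B1 B2); auto. intros j; lia. Qed.

Lemma computed_bounded x : 0 <= x <= 1 -> Rabs (f x) <= INR (query_bound 0) + 2.
Proof.
  intros Hx. pose proof (floor_name_spec x Hx) as Hn.
  pose proof (computes_err x _ 0 Hx Hn) as Herr. simpl pow in Herr.
  assert (Hle : (pr_eval (floor_name x) Phi [0%nat] <= query_bound 0)%nat).
  { apply (proj2 (majorant_correct Phi) _ _ [0%nat] [0%nat] (name_bounded _ _ Hn) (name_bounded _ _ Hn));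
      auto. intros j; lia. }
  apply le_INR in Hle. pose proof (rat_of_code_bound (pr_eval (floor_name x) Phi [0%nat])).
  set (r := rat_of_code _) in *. set (v := INR (pr_eval _ Phi _)) in *. clearbody r v.
  unfold Rabs in *. repeat destruct Rcase_abs; lra.
Qed.

(** For [y <= x] close enough, the n-th outputs on the name of [x] and on the
    hybrid name of [y] coincide, so [f x] and [f y] are both close to it. *)
Lemma modulus_ordered x y n : 0 <= y <= x -> x <= 1 -> x - y <= / 2 ^ (query_bound n + 2) ->
  Rabs (f x - f y) <= 4 / 2 ^ n.
Proof.
  intros Hy Hx Hxy.
  assert (Hx' : 0 <= x <= 1) by lra. assert (Hy' : 0 <= y <= 1) by lra.
  pose proof (floor_name_spec x Hx') as Nx. pose proof (hybrid_name x y (query_bound n) Hy Hx Hxy) as Ny.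
  pose proof (computes_err x _ n Hx' Nx). pose proof (computes_err y _ n Hy' Ny).
  rewrite <- (output_depends_on_prefix (floor_name x) _ n (name_bounded _ _ Nx) (name_bounded _ _ Ny)) in H0.
  2:{ intros j Hj. destruct (Nat.leb_spec j (query_bound n)); [reflexivity|lia]. }
  set (r := rat_of_code _) in *. clearbody r.
  assert (4 / 2 ^ n = 2 / 2 ^ n + 2 / 2 ^ n) by (field; apply pow_nonzero; lra).
  set (t := 2 / 2 ^ n) in *. clearbody t.
  unfold Rabs in *. repeat destruct Rcase_abs; lra.
Qed.

Lemma modulus x y n : 0 <= x <= 1 -> 0 <= y <= 1 -> Rabs (x - y) <= / 2 ^ (query_bound n + 2) ->
  Rabs (f x - f y) <= 4 / 2 ^ n.
Proof.
  intros Hx Hy Hxy. destruct (Rle_lt_dec y x).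
  - apply modulus_ordered; try lra. rewrite Rabs_right in Hxy; lra.
  - rewrite Rabs_minus_sym. apply modulus_ordered; try lra. rewrite Rabs_left in Hxy; lra.
Qed.

End Modulus.

(** ** The scheme computing the approximating polynomials

    For a scheme [Phi] we build, stage by stage, oracle-free schemes for:
    [Phi] run on the canonical name of [k / 2^d]; the rounding of that value
    to a multiple of [2^-e]; the monomial coefficients of the Bernstein
    polynomial of degree [2^d] of the rounded samples (split into a positive
    and a negative part, since schemes compute naturals); and the code of the
    list of these coefficients. *)

Section Coding.
Local Open Scope nat_scope.

Definition NAMEQ := compile 3
  (ediv (emul (EVar 1) (epow (econst 2) (EVar 0))) (epow (econst 2) (EVar 2))).
Lemma NAMEQ_sem j k d : pr_eval o0 NAMEQ [j; k; d] = dyadic_name k d j.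
Proof.
  unfold NAMEQ. rewrite compile_exact by reflexivity. rewrite den_div.
  - rewrite den_mul, !den_pow, den_const. reflexivity.
  - rewrite den_pow, den_const. cbn [den nth]. apply Nat.neq_0_lt_0, Nat.pow_nonzero. lia.
Qed.

Variable Phi : pr.

Definition thread_K := S (S (thread_width Phi)).

Definition PHI_AT := PComp (thread thread_K NAMEQ Phi)
  ((PProj 0 :: repeat PZero (thread_K - 1)) ++ [PProj 1; PProj 2]).

Definition sample_code n k d := pr_eval (dyadic_name k d) Phi [n].

Lemma PHI_AT_sem n k d : pr_eval o0 PHI_AT [n; k; d] = sample_code n k d.
Proof.
  assert (HK : 2 <= thread_K) by (unfold thread_K; lia).
  assert (Hok : threadable thread_K Phi = true) by (apply threadable_width; unfold thread_K; lia).
  unfold PHI_AT. rewrite pr_eval_comp. cbn [map]. rewrite map_app. cbn [map pr_eval nth].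
  replace (n :: map (fun g => pr_eval o0 g [n; k; d]) (repeat PZero (thread_K - 1)))
    with (pad thread_K [n]).
  - rewrite (thread_spec _ _ HK Phi Hok). apply pr_eval_oracle_ext. intros j. apply NAMEQ_sem.
  - apply nth_ext with (d := 0) (d' := 0).
    + rewrite length_pad. cbn [length]. rewrite length_map, repeat_length. lia.
    + intros j Hj. rewrite length_pad in Hj. rewrite nth_pad.
      destruct (Nat.ltb_spec j thread_K); [|lia].
      destruct j; [reflexivity|]. cbn [nth].
      rewrite (nth_map_lt _ _ _ _ PZero) by (rewrite repeat_length; lia).
      rewrite nth_repeat. destruct j; reflexivity.
Qed.

(** The sample value truncated toward zero to a multiple of [2^-e], as a
    difference [(round_pos - round_neg) / 2^e] of naturals (one of them is 0). *)
Definition round_pos n k d e := let v := sample_code n k d in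
  (rat_pos v - rat_neg v) * 2 ^ e / S (rat_den v).
Definition round_neg n k d e := let v := sample_code n k d in
  (rat_neg v - rat_pos v) * 2 ^ e / S (rat_den v).

Definition esample := ECall PHI_AT [EVar 0; EVar 1; EVar 2].
Definition ROUND_POS := compile 4 (ediv
  (emul (esub (eun1 esample) (eun1 (eun2 esample))) (epow (econst 2) (EVar 3)))
  (ESucc (eun2 (eun2 esample)))).
Definition ROUND_NEG := compile 4 (ediv
  (emul (esub (eun1 (eun2 esample)) (eun1 esample)) (epow (econst 2) (EVar 3)))
  (ESucc (eun2 (eun2 esample)))).

Lemma den_esample n k d e : den [n; k; d; e] esample = sample_code n k d.
Proof. apply PHI_AT_sem. Qed.

Lemma ROUND_POS_sem n k d e : pr_eval o0 ROUND_POS [n; k; d; e] = round_pos n k d e.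
Proof.
  unfold ROUND_POS. rewrite compile_exact, den_div by (reflexivity || (cbn [den]; lia)).
  rewrite den_mul, den_sub, den_pow, den_const, !den_un1, den_succ, !den_un2, den_esample.
  reflexivity.
Qed.

Lemma ROUND_NEG_sem n k d e : pr_eval o0 ROUND_NEG [n; k; d; e] = round_neg n k d e.
Proof.
  unfold ROUND_NEG. rewrite compile_exact, den_div by (reflexivity || (cbn [den]; lia)).
  rewrite den_mul, den_sub, den_pow, den_const, !den_un1, den_succ, !den_un2, den_esample.
  reflexivity.
Qed.

(** The [k]-th summand of the positive ([pos = true]) or negative part of
    [2^e] times the coefficient of [x^m]: its sign is [(-1)^(m-k)] times the
    sign of the rounded sample. *)
Definition coef_term (pos : bool) m n d e k :=
  binom (2 ^ d) k * binom (2 ^ d - k) (m - k) *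
  (if Bool.eqb pos (Nat.even (m - k)) then round_pos n k d e else round_neg n k d e).

Definition coef (pos : bool) m n d e := sumN (coef_term pos m n d e) (S m).

(** Evaluated in the environment [[k; _; m; n; d; e]]. *)
Definition ecoef_term (pos : bool) :=
  let eN := epow (econst 2) (EVar 4) in
  let rpos := ECall ROUND_POS [EVar 3; EVar 0; EVar 4; EVar 5] in
  let rneg := ECall ROUND_NEG [EVar 3; EVar 0; EVar 4; EVar 5] in
  let par := epar (esub (EVar 2) (EVar 0)) in
  emul (emul (ebinom eN (EVar 0)) (ebinom (esub eN (EVar 0)) (esub (EVar 2) (EVar 0))))
    (if pos then eadd (emul rpos (esub (econst 1) par)) (emul rneg par)
     else eadd (emul rneg (esub (econst 1) par)) (emul rpos par)).

Lemma den_coef_term pos k r m n d e : k <= m -> m <= 2 ^ d ->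
  den [k; r; m; n; d; e] (ecoef_term pos) = coef_term pos m n d e k.
Proof.
  intros Hk Hm. unfold ecoef_term, coef_term. rewrite !den_mul.
  unfold ebinom. cbn [den map]. rewrite !den_sub, den_pow, den_const. cbn [den nth].
  rewrite !BINOM_sem by lia. f_equal.
  destruct pos; rewrite den_add, !den_mul, den_sub, den_const; unfold epar; cbn [den map nth];
    rewrite den_sub; cbn [den nth]; rewrite PAR_sem, ROUND_POS_sem, ROUND_NEG_sem;
    destruct (Nat.even (m - k)); cbn [Bool.eqb]; lia.
Qed.

Definition COEF pos := compile 4 (ERec EZero (eadd (EVar 1) (ecoef_term pos)) (ESucc (EVar 0))).

Lemma COEF_sem pos m n d e : m <= 2 ^ d -> pr_eval o0 (COEF pos) [m; n; d; e] = coef pos m n d e.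
Proof.
  intros Hm. unfold COEF, coef. rewrite compile_exact, den_rec by reflexivity. cbn [den nth].
  assert (Hsum : forall k, k <= S m ->
    den_iter [m; n; d; e] EZero (eadd (EVar 1) (ecoef_term pos)) k = sumN (coef_term pos m n d e) k).
  { induction k; intros Hk; cbn [den_iter sumN]; auto.
    rewrite den_add. cbn [den nth]. rewrite IHk, den_coef_term by lia. reflexivity. }
  apply Hsum. lia.
Qed.

Definition code m n d e := cpair (coef true m n d e) (cpair (coef false m n d e) (2 ^ e - 1)).

Definition CODE := compile 4 (epair (ECall (COEF true) [EVar 0; EVar 1; EVar 2; EVar 3])
  (epair (ECall (COEF false) [EVar 0; EVar 1; EVar 2; EVar 3])
         (esub (epow (econst 2) (EVar 3)) (econst 1)))).

Lemma CODE_sem m n d e : m <= 2 ^ d -> pr_eval o0 CODE [m; n; d; e] = code m n d e.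
Proof.
  intros Hm. unfold CODE. rewrite compile_exact by reflexivity.
  rewrite !den_pair, den_sub, den_pow, !den_const. cbn [den map nth].
  rewrite !COEF_sem by auto. reflexivity.
Qed.

(** The codes for [m = 0 .. 2^d], listed by a recursion counting down from [2^d]. *)
Definition LIST := compile 3 (ERec EZero
  (ESucc (epair (ECall CODE [esub (epow (econst 2) (EVar 3)) (EVar 0); EVar 2; EVar 3; EVar 4])
                (EVar 1)))
  (ESucc (epow (econst 2) (EVar 1)))).

Lemma LIST_sem n d e :
  pr_eval o0 LIST [n; d; e] = lcode (map (fun m => code m n d e) (seq 0 (S (2 ^ d)))).
Proof.
  unfold LIST. rewrite compile_exact, den_rec by reflexivity.
  rewrite den_succ, den_pow, den_const. cbn [den nth].
  set (N := 2 ^ d).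
  assert (Hlist : forall j, j <= S N -> den_iter [n; d; e] EZero
    (ESucc (epair (ECall CODE [esub (epow (econst 2) (EVar 3)) (EVar 0); EVar 2; EVar 3; EVar 4])
                  (EVar 1))) j
    = lcode (map (fun m => code m n d e) (seq (S N - j) j))).
  { induction j; intros Hj; cbn [den_iter]; [reflexivity|].
    rewrite den_succ, den_pair. cbn [den map nth]. rewrite den_sub, den_pow, den_const.
    cbn [den nth]. rewrite CODE_sem by (unfold N; lia). rewrite IHj by lia.
    replace (S N - S j) with (N - j) by lia. replace (S N - j) with (S (N - j)) by lia.
    reflexivity. }
  rewrite Hlist, Nat.sub_diag by lia. reflexivity.
Qed.

(** Degree exponent used for precision [2^-i]: [2^d] with
    [d = 2 B + i + c0], where [B] bounds the queries for output [i + 4]. *)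
Definition degree_exp c0 i := 2 * eval0 (majorant Phi) [i + 4] + i + c0.

Definition APPROX c0 :=
  let nE := eadd (EVar 0) (econst 4) in
  compile 1 (ECall LIST
    [nE; eadd (eadd (emul (econst 2) (ECall (majorant Phi) [nE])) (EVar 0)) (econst c0); nE]).

Lemma APPROX_sem c0 i : pr_eval o0 (APPROX c0) [i] =
  lcode (map (fun m => code m (i + 4) (degree_exp c0 i) (i + 4)) (seq 0 (S (2 ^ degree_exp c0 i)))).
Proof.
  unfold APPROX. rewrite compile_exact by reflexivity. cbn [den map].
  rewrite !den_add, den_mul, !den_const. cbn [den map nth].
  rewrite den_add, den_const. cbn [den nth]. apply LIST_sem.
Qed.

Lemma APPROX_oracle_free c0 : oracle_free (APPROX c0) = true.
Proof.
  assert (HPHI : oracle_free PHI_AT = true).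
  { unfold PHI_AT. rewrite oracle_free_comp, thread_oracle_free by reflexivity. simpl andb.
    rewrite forallb_app. simpl. rewrite ?andb_true_r.
    induction (thread_width Phi); simpl; auto. }
  assert (HR : oracle_free ROUND_POS = true /\ oracle_free ROUND_NEG = true).
  { split; apply compile_oracle_free; cbn -[PHI_AT]; rewrite HPHI; reflexivity. }
  assert (HC : forall pos, oracle_free (COEF pos) = true).
  { destruct HR as [HP HN]. intros pos. apply compile_oracle_free.
    destruct pos; cbn -[ROUND_POS ROUND_NEG]; rewrite HP, HN; reflexivity. }
  apply compile_oracle_free. cbn -[COEF majorant]. rewrite !HC, majorant_oracle_free.
  simpl. rewrite expr_oracle_free_const. reflexivity.
Qed.

End Coding.

Section Correctness.
Local Open Scope R_scope.

Variables (Phi : pr) (f : R -> R).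

Definition sample n d e k := (INR (round_pos Phi n k d e) - INR (round_neg Phi n k d e)) / 2 ^ e.

Lemma pow_minus_one x : (-1) ^ x = if Nat.even x then 1 else -1.
Proof.
  induction x; [reflexivity|]. simpl pow. rewrite IHx, Nat.even_succ, <- Nat.negb_even.
  destruct (Nat.even x); simpl; ring.
Qed.

Lemma mono_coef_code m n d e : mono_coef (2 ^ d) (sample n d e) m = rat_of_code (code Phi m n d e).
Proof.
  unfold rat_of_code, code. rewrite !unpair_pair.
  replace (S (2 ^ e - 1)) with (2 ^ e)%nat by (pose proof (Nat.pow_nonzero 2 e); lia).
  rewrite INR_pow2. unfold coef. rewrite !INR_sumN, sumR_minus.
  unfold Rdiv. rewrite Rmult_comm, <- sumR_scal. unfold mono_coef.
  apply sumR_ext. intros k _. rewrite pow_minus_one. unfold sample, coef_term. rewrite !mult_INR.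
  destruct (Nat.even (m - k)); cbn [Bool.eqb]; field; apply pow_nonzero; lra.
Qed.

Lemma round_err a b c E : (0 < E)%nat ->
  Rabs ((INR ((a - b) * E / S c) - INR ((b - a) * E / S c)) / INR E
        - (INR a - INR b) / INR (S c)) <= / INR E.
Proof.
  intros HE. assert (HE' : 0 < INR E) by (apply lt_0_INR; auto).
  assert (Hc : 0 < INR (S c)) by (apply lt_0_INR; lia).
  assert (Hround : forall p q, (q <= p)%nat ->
    Rabs (INR ((p - q) * E / S c) / INR E - (INR p - INR q) / INR (S c)) <= / INR E).
  { intros p q Hqp. pose proof (div_floor ((p - q) * E) (S c) ltac:(lia)) as [H1 H2].
    rewrite mult_INR, minus_INR in H1, H2 by lia.
    set (z := INR ((p - q) * E / S c)) in *.
    replace (z / INR E - (INR p - INR q) / INR (S c))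
      with ((z - (INR p - INR q) * INR E / INR (S c)) / INR E) by (field; lra).
    unfold Rdiv at 1. rewrite Rabs_mult, Rabs_inv, (Rabs_right (INR E)) by lra.
    rewrite <- (Rmult_1_l (/ INR E)) at 2. apply Rmult_le_compat_r; [left; apply Rinv_0_lt_compat; auto|].
    apply Rabs_le. unfold Rdiv in *. lra. }
  destruct (Nat.le_gt_cases b a).
  - replace (b - a)%nat with 0%nat by lia. rewrite Nat.mul_0_l, Nat.Div0.div_0_l.
    change (INR 0) with 0. rewrite Rminus_0_r. apply Hround. lia.
  - replace (a - b)%nat with 0%nat by lia. rewrite Nat.mul_0_l, Nat.Div0.div_0_l.
    change (INR 0) with 0.
    replace ((0 - INR ((b - a) * E / S c)) / INR E - (INR a - INR b) / INR (S c))
      with (- (INR ((b - a) * E / S c) / INR E - (INR b - INR a) / INR (S c))) by (field; lra).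
    rewrite Rabs_Ropp. apply Hround. lia.
Qed.

Lemma sample_err n d e k : Rabs (sample n d e k - rat_of_code (sample_code Phi n k d)) <= / 2 ^ e.
Proof.
  unfold sample, round_pos, round_neg. cbv zeta. rewrite rat_of_code_split, <- INR_pow2.
  apply round_err. apply Nat.neq_0_lt_0, Nat.pow_nonzero. lia.
Qed.

Lemma approx_eval c0 i x :
  poly_eval (ratlist_of_code (pr_eval (fun _ => 0%nat) (APPROX Phi c0) [i])) x
  = bern_sum (2 ^ degree_exp Phi c0 i) x (1 - x) (sample (i + 4) (degree_exp Phi c0 i) (i + 4)).
Proof.
  change (fun _ => 0%nat) with o0.
  rewrite APPROX_sem, ratlist_lcode, map_map, poly_eval_seq, <- mono_coef_spec.
  apply sumR_ext. intros m _. rewrite mono_coef_code. reflexivity.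
Qed.

Lemma bernstein_tail_small (C0 B n : nat) :
  (INR C0 + 2) / (2 * 2 ^ (2 * B + 4 + n + (C0 + 1)) * (/ 2 ^ (B + 2)) ^ 2) <= / 2 ^ n.
Proof.
  pose proof (pow2_pos n) as Hn. pose proof (pow2_pos (C0 + 1)) as HC.
  pose proof (pow2_pos (2 * B + 4)) as HB.
  assert (E : 2 * 2 ^ (2 * B + 4 + n + (C0 + 1)) * (/ 2 ^ (B + 2)) ^ 2 = 2 * 2 ^ n * 2 ^ (C0 + 1)).
  { rewrite pow_inv, <- pow_mult. replace ((B + 2) * 2)%nat with (2 * B + 4)%nat by lia.
    rewrite (pow_add 2 (2 * B + 4 + n)), (pow_add 2 (2 * B + 4)). field. lra. }
  assert (Hc : INR C0 + 2 <= 2 * 2 ^ (C0 + 1)).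
  { pose proof (pow_ge (C0 + 2)) as Hp. apply le_INR in Hp. rewrite INR_pow2, plus_INR in Hp.
    replace (2 ^ (C0 + 2)) with (2 * 2 ^ (C0 + 1)) in Hp by (rewrite !pow_add; simpl; ring).
    simpl in Hp. lra. }
  rewrite E. apply Rmult_le_reg_r with (2 * 2 ^ n * 2 ^ (C0 + 1)); [nra|].
  unfold Rdiv. rewrite Rmult_assoc, Rinv_l by nra.
  replace (/ 2 ^ n * (2 * 2 ^ n * 2 ^ (C0 + 1))) with (2 * 2 ^ (C0 + 1)) by (field; lra). lra.
Qed.

Hypothesis HPhi : computes Phi f.

Lemma oscillation_bound a b : 0 <= a <= 1 -> 0 <= b <= 1 ->
  Rabs (f a - f b) <= 2 * (INR (query_bound Phi 0) + 2).
Proof.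
  intros Ha Hb. pose proof (computed_bounded Phi f HPhi a Ha).
  pose proof (computed_bounded Phi f HPhi b Hb).
  set (u := f a) in *. set (w := f b) in *. clearbody u w.
  unfold Rabs in *. repeat destruct Rcase_abs; lra.
Qed.
Lemma sample_close n d k : (k <= 2 ^ d)%nat ->
  Rabs (sample n d n k - f (INR k / INR (2 ^ d))) <= 2 / 2 ^ n + / 2 ^ n.
Proof.
  intros Hk. rewrite INR_pow2.
  pose proof (sample_err n d n k) as Hround. pose proof (dyadic_name_spec k d Hk) as Hname.
  pose proof (computes_err Phi f HPhi _ _ n (dyadic_node_range k d Hk) Hname) as Herr.
  unfold sample_code in Hround.
  set (w := sample n d n k) in *. set (q := rat_of_code _) in *. clearbody w q.
  unfold Rabs in *. repeat destruct Rcase_abs; lra.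
Qed.

(** Error [3 * 2^-n] from the samples, [4 * 2^-n] from the modulus at
    distance [2^-(B+2)], and [2^-n] from the tail of the Bernstein estimate. *)
Lemma approx_error i x : 0 <= x <= 1 ->
  let n := (i + 4)%nat in
  let d := degree_exp Phi (query_bound Phi 0 + 9) i in
  Rabs (f x - bern_sum (2 ^ d) x (1 - x) (sample n d n)) <= 8 / 2 ^ n.
Proof.
  intros Hx n d. set (C0 := query_bound Phi 0). set (B := query_bound Phi n).
  assert (HN : INR (2 ^ d) = 2 ^ (2 * B + 4 + n + (C0 + 1))).
  { rewrite INR_pow2. f_equal. unfold d, degree_exp, B, C0, query_bound, n. lia. }
  assert (Hnode : forall k, (k <= 2 ^ d)%nat -> 0 <= INR k / INR (2 ^ d) <= 1)
    by (intros k Hk; rewrite INR_pow2; apply dyadic_node_range; auto).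
  rewrite Rabs_minus_sym. eapply Rle_trans.
  - apply (bernstein_approx f (sample n d n) (2 ^ d) x (4 / 2 ^ n) (/ 2 ^ (B + 2))
             (2 / 2 ^ n + / 2 ^ n) (INR C0 + 2)); auto.
    + pose proof (Nat.pow_nonzero 2 d). lia.
    + apply Rinv_0_lt_compat, pow2_pos.
    + unfold Rdiv. apply Rmult_le_pos; [lra| left; apply Rinv_0_lt_compat, pow2_pos].
    + intros k Hk. apply sample_close; auto.
    + intros k Hk Hd. apply (modulus Phi f HPhi); auto.
    + intros k Hk. apply oscillation_bound; auto.
  - rewrite HN. pose proof (bernstein_tail_small C0 B n) as Htail.
    assert (Hdiv : forall c, c / 2 ^ n = c * / 2 ^ n) by (intros; unfold Rdiv; ring).
    rewrite !Hdiv in *. lra.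
Qed.

End Correctness.

Theorem mainTheorem7 (f : R -> R) :
  punctually_computable f -> uniformly_punctually_computable f.
Proof.
  intros [Phi HPhi].
  exists (APPROX Phi (query_bound Phi 0 + 9)). split; [apply APPROX_oracle_free|].
  intros i. exists (8 / 2 ^ (i + 4)). split.
  - replace (8 / 2 ^ (i + 4)) with (/ 2 * / 2 ^ i)
      by (rewrite pow_add; simpl; field; apply pow_nonzero; lra).
    pose proof (Rinv_0_lt_compat _ (pow2_pos i)). lra.
  - intros x Hx. rewrite approx_eval. apply approx_error; auto.
Qed.
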